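(* The map $T:\mathbb{T}^2\to\mathbb{T}^2$ is continuous and surjective, and $T\circ P=P\circ T$. Moreover, for every $x\in\mathbb{T}^1\setminus\mathfrak{O}^-$ one has $\mu_x[0,\tau_x(y)]=y$ for all $y\in[0,1]$, and $y\mapsto\tau_x(y)$ is strictly increasing on $[0,1]$; consequently $T$ is injective on $\mathbb{T}^2\setminus(\mathfrak{O}^-\times\mathbb{T}^1)$ and maps each fiber $\{x\}\times\mathbb{T}^1$, $x\notin\mathfrak O^-$, bijectively onto itself.
   Context: Notation: $\mathbb{T}^1=\mathbb{R}/\mathbb{Z}$, $\mathbb{T}^2=\mathbb{T}^1\times\mathbb{T}^1$, $\lambda$ is Lebesgue probability measure on $\mathbb{T}^1$. For reals $a\le b\le a+1$, $[a,b]$ denotes the image in $\mathbb{T}^1$ of the real interval $[a,b]$; so $[0,1]=\mathbb{T}^1$, $[0,0]=\{0\}$. $P(x,y)=(x+\tfrac12,1-y)$ on $\mathbb{T}^2$. Standing setup: $\alpha$ is irrational, $R(x)=x+\alpha$ on $\mathbb{T}^1$. $r:\mathbb{T}^1\to\mathbb{R}$ is continuous with $r(x+\tfrac12)=-r(x)$, $r(0)=r(\tfrac12)=0$, $0<r(x)<\tfrac14$ for $x\in(0,\tfrac12)$, and such that $S(x,y)=(x+\alpha,\,y+r(x))$ is a minimal homeomorphism of $\mathbb{T}^2$. Put $\sigma_x(y)=y+r(x)$, $\sigma_x^0=\mathrm{id}$, $\sigma^n_x=\sigma_{R^{n-1}(x)}\circ\cdots\circ\sigma_{R(x)}\circ\sigma_x$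 ($n\ge1$), so $S^n(x,y)=(R^n(x),\sigma^n_x(y))$. Fix $x_1^*\in(0.1,0.2)\cap\mathbb{Q}$, $x_2^*=x_1^*+\tfrac12$, $y_1^*\in\mathbb{T}^1$, $y_2^*=1-y_1^*$, $z_j^*=(x_j^*,y_j^* )$, such that for all $m\in\mathbb{Z}$ and $j=1,2$ the second coordinate $Y$ of $S^m(z_j^* )$ satisfies $Y\neq0$ and $Y\ne -r(R^m(x_j^* ))$. Fix $\bar x_1<x_1^*<\bar x_2$ with $[\bar x_1,\bar x_2]\subset(0,\tfrac12)$ and continuous $\tilde\psi,\tilde\phi:[\bar x_1,\bar x_2]\to[0,1]$ with $\tilde\psi(\bar x_1)=0$, $\tilde\phi(\bar x_1)=1$, $\tilde\psi(\bar x_2)=1$, $\tilde\phi(\bar x_2)=0$, $\tilde\psi<\tilde\phi$ on $[\bar x_1,x_1^* )$, $\tilde\psi>\tilde\phi$ on $(x_1^*,\bar x_2]$, and $\tilde\psi(x_1^* )=\tilde\phi(x_1^* )\equiv y_1^*\pmod 1$. Define Borel probability measures $\mu_x^0$ on $\mathbb{T}^1$: $\mu^0_x=\lambda$ if $x\notin(\bar x_1,\bar x_2)\cup(\bar x_1+\tfrac12,\bar x_2+\tfrac12)$; $\mu^0_{x_j^*}=\delta_{y_j^*}$; for $x\in(\bar x_1,\bar x_2)\setminus\{x_1^*\}$, $\mu^0_x(A)=\lambda(A\cap I_x)/|\tilde\phi(x)-\tilde\psi(x)|$ where $I_x$ is the image in $\mathbb{T}^1$ of the real interval with endpoints $\tilde\psi(x),\tilde\phi(x)$;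 for $x=u+\tfrac12$ with $u\in(\bar x_1,\bar x_2)\setminus\{x_1^*\}$, $\mu^0_x(A)=\mu^0_u(\{1-y:y\in A\})$. For $n\ge0$ let $\mu^n_x(A)=\mu^0_{R^n(x)}(\sigma^n_x(A))$, and $\mu_x=\tfrac12\big(\lambda+\sum_{n\ge0}2^{-n-1}\mu^n_x\big)$. For $x\in\mathbb{T}^1$, $y\in[0,1]$ let $\tau_x(y)=\min\{y'\in[0,1]:\mu_x[0,y']\ge y\}$ (one has $\tau_x(0)=0$, $\tau_x(1)=1$), and $T(x,y)=(x,\tau_x(y))$. Let $\mathfrak{O}^-=\{R^j(x_k^* ): j\le0,\ k=1,2\}$. *)

From Stdlib Require Import Reals Lra ClassicalEpsilon.
Open Scope R_scope.

(** * The circle T^1 = R/Z and the torus T^2, represented by real lifts *)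

(* fractional part, in [0,1) ; Int_part z = floor z *)
Definition frac (z : R) : R := z - IZR (Int_part z).

Definition eqT1 (u v : R) : Prop := exists k : Z, u = v + IZR k.
Definition eqT2 (p q : R * R) : Prop := eqT1 (fst p) (fst q) /\ eqT1 (snd p) (snd q).

Definition dT1 (u v : R) : R := Rmin (frac (u - v)) (1 - frac (u - v)).
Definition dT2 (p q : R * R) : R := Rmax (dT1 (fst p) (fst q)) (dT1 (snd p) (snd q)).

Definition torus_continuous (F : R * R -> R * R) : Prop :=
  forall p eps, 0 < eps -> exists delta, 0 < delta /\
    forall q, dT2 q p < delta -> dT2 (F q) (F p) < eps.

Definition torus_surjective (F : R * R -> R * R) : Prop :=
  forall q, exists p, eqT2 (F p) q.

Definition irrational (a : R) : Prop :=
  forall p q : Z, q <> 0%Z -> a <> IZR p / IZR q.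
Definition rational (a : R) : Prop :=
  exists p q : Z, q <> 0%Z /\ a = IZR p / IZR q.

Definition continuous_on_interval (f : R -> R) (a b : R) : Prop :=
  forall x, a <= x <= b -> forall eps, 0 < eps -> exists delta, 0 < delta /\
    forall z, a <= z <= b -> Rabs (z - x) < delta -> Rabs (f z - f x) < eps.

(** * The skew product S(x,y) = (x + al, y + r x) and its iterates *)

(* ssum al r n x = sum_{k=0}^{n-1} r (x + k al), so sigma^n_x(y) = y + ssum al r n x *)
Fixpoint ssum (al : R) (r : R -> R) (n : nat) (x : R) : R :=
  match n with
  | O => 0
  | S n' => ssum al r n' x + r (x + INR n' * al)
  end.

Fixpoint ssum_neg (al : R) (r : R -> R) (n : nat) (x : R) : R :=
  match n with
  | O => 0
  | S n' => ssum_neg al r n' x + r (x - INR (S n') * al)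
  end.

Definition S_iter (al : R) (r : R -> R) (m : Z) (p : R * R) : R * R :=
  match m with
  | Z0 => p
  | Zpos q => let n := Pos.to_nat q in
              (fst p + INR n * al, snd p + ssum al r n (fst p))
  | Zneg q => let n := Pos.to_nat q in
              (fst p - INR n * al, snd p - ssum_neg al r n (fst p))
  end.

Definition S_minimal (al : R) (r : R -> R) : Prop :=
  forall p q eps, 0 < eps -> exists m : Z, dT2 (S_iter al r m p) q < eps.

(** * Measures evaluated on arcs.
    arc a L (0 <= L <= 1) is the image in T^1 of the real interval [a, a+L]. *)

Definition ilen (a b c d : R) : R := Rmax 0 (Rmin b d - Rmax a c).

(* Lebesgue measure of (arc a L) ∩ (arc c M), for 0 <= L, M <= 1 *)
Definition arc_overlap (a L c M : R) : R :=
  let a' := frac a in let c' := frac c in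
  ilen a' (a' + L) (c' - 2) (c' - 2 + M) +
  ilen a' (a' + L) (c' - 1) (c' - 1 + M) +
  ilen a' (a' + L) c' (c' + M) +
  ilen a' (a' + L) (c' + 1) (c' + 1 + M) +
  ilen a' (a' + L) (c' + 2) (c' + 2 + M).

Definition dirac (y a L : R) : R :=
  if Rle_dec (frac (y - a)) L then 1 else 0.

Definition mu0 (x1 y1 xb1 xb2 : R) (psi phi : R -> R) (x a L : R) : R :=
  let u := frac x in
  match Rlt_dec xb1 u, Rlt_dec u xb2 with
  | left _, left _ =>
      if Req_EM_T u x1 then dirac y1 a L
      else arc_overlap a L (Rmin (psi u) (phi u)) (Rabs (phi u - psi u))
           / Rabs (phi u - psi u)
  | _, _ =>
    match Rlt_dec (xb1 + /2) u, Rlt_dec u (xb2 + /2) with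
    | left _, left _ =>
        let w := u - /2 in
        if Req_EM_T w x1 then dirac (1 - y1) a L
        else (* mu^0_w of the reflected arc {1 - y : y in arc a L} = arc (1-a-L) L *)
          arc_overlap (1 - a - L) L (Rmin (psi w) (phi w)) (Rabs (phi w - psi w))
           / Rabs (phi w - psi w)
    | _, _ => L  (* Lebesgue measure *)
    end
  end.

(* mu^n_x [0, L] = mu^0_{R^n x} (sigma^n_x [0,L]) *)
Definition mun (al : R) (r : R -> R) (x1 y1 xb1 xb2 : R) (psi phi : R -> R)
  (n : nat) (x L : R) : R :=
  mu0 x1 y1 xb1 xb2 psi phi (x + INR n * al) (ssum al r n x) L.

Definition series_sum (f : nat -> R) : R :=
  epsilon (inhabits 0) (fun l => infinite_sum f l).

Definition mu (al : R) (r : R -> R) (x1 y1 xb1 xb2 : R) (psi phi : R -> R)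
  (x L : R) : R :=
  / 2 * (L + series_sum (fun n => (/ 2) ^ (n + 1) * mun al r x1 y1 xb1 xb2 psi phi n x L)).

Definition tau (al : R) (r : R -> R) (x1 y1 xb1 xb2 : R) (psi phi : R -> R)
  (x y : R) : R :=
  epsilon (inhabits 0) (fun y' => (0 <= y' <= 1) /\
    y <= mu al r x1 y1 xb1 xb2 psi phi x y' /\
    forall y'', 0 <= y'' <= 1 -> y <= mu al r x1 y1 xb1 xb2 psi phi x y'' -> y' <= y'').

Definition Tmap (al : R) (r : R -> R) (x1 y1 xb1 xb2 : R) (psi phi : R -> R)
  (p : R * R) : R * R :=
  (fst p, tau al r x1 y1 xb1 xb2 psi phi (fst p) (frac (snd p))).

Definition Pmap (p : R * R) : R * R := (fst p + / 2, 1 - snd p).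

Definition inOminus (al x1 x : R) : Prop :=
  exists j : nat, eqT1 x (x1 - INR j * al) \/ eqT1 x (x1 + / 2 - INR j * al).

From Coquelicot Require Import Coquelicot.
From Stdlib Require Import Reals Lra Lia ZArith ClassicalEpsilon FunctionalExtensionality PropExtensionality.
Open Scope R_scope.

(* Write [F_x L] for the [mu_x]-measure of the arc [0, L] of the fibre over [x].  Half of
   [mu_x] is Lebesgue measure, so [F_x] has slope at least 1/2; it is right continuous with
   [F_x 1 = 1], and [tau_x] is its quantile function.  The measures [mu^n_x] are uniform laws
   on arcs, except for Dirac masses at the heights of the backward orbits of [z_1], [z_2];
   those heights avoid 0, so [F_x 0 = 0], and off [O^-] all the laws are atomless, so [F_x] is a
   continuous increasing bijection of [0, 1] inverse to [tau_x].  The arcs depend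
   continuously on the base point, so [F_x] varies continuously with [x] up to an
   arbitrarily small widening of the arc, which is enough for the quantiles to vary
   continuously: [T] is continuous.  Finally [mu^0_(x+1/2)] is the mirror image of [mu^0_x]
   and [r (x + 1/2) = - r x], so the fibre law over [x + 1/2] mirrors the one over [x] and
   [T] commutes with [P]. *)

(** * The circle *)

Lemma Int_part_bounds z : IZR (Int_part z) <= z < IZR (Int_part z) + 1.
Proof. destruct (base_Int_part z); lra. Qed.

Lemma Int_part_unique z k : IZR k <= z < IZR k + 1 -> Int_part z = k.
Proof.
  intros [H1 H2]. unfold Int_part.
  assert ((k + 1)%Z = up z) by (apply tech_up; rewrite plus_IZR; simpl; lra).
  lia.
Qed.

Lemma frac_range z : 0 <= frac z < 1.
Proof. unfold frac; destruct (Int_part_bounds z); lra. Qed.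

Lemma frac_decomp z : z = IZR (Int_part z) + frac z.
Proof. unfold frac; ring. Qed.

Lemma Int_part_of_decomp z k f : z = IZR k + f -> 0 <= f < 1 -> Int_part z = k.
Proof. intros -> Hf. apply Int_part_unique; lra. Qed.

Lemma frac_of_decomp z k f : z = IZR k + f -> 0 <= f < 1 -> frac z = f.
Proof. intros E Hf. unfold frac. rewrite (Int_part_of_decomp z k f E Hf). lra. Qed.

Lemma frac_id z : 0 <= z < 1 -> frac z = z.
Proof. intro H. apply (frac_of_decomp z 0); [simpl; ring | exact H]. Qed.

Lemma Int_part_shift z k : Int_part (z + IZR k) = (Int_part z + k)%Z.
Proof.
  apply (Int_part_of_decomp _ _ (frac z)); [rewrite plus_IZR, (frac_decomp z) at 1; ring|].
  apply frac_range.
Qed.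

Lemma frac_shift z k : frac (z + IZR k) = frac z.
Proof. unfold frac; rewrite Int_part_shift, plus_IZR; ring. Qed.

Lemma eqT1_refl u : eqT1 u u.
Proof. exists 0%Z; simpl; ring. Qed.

Lemma eqT1_sym u v : eqT1 u v -> eqT1 v u.
Proof. intros [k H]; exists (-k)%Z; rewrite opp_IZR; lra. Qed.

Lemma eqT1_frac u v : eqT1 u v -> frac u = frac v.
Proof. intros [k ->]. apply frac_shift. Qed.

Lemma frac_eqT1 u v : frac u = frac v -> eqT1 u v.
Proof.
  intro H; exists (Int_part u - Int_part v)%Z; rewrite minus_IZR.
  rewrite (frac_decomp u) at 1; rewrite (frac_decomp v) at 1; rewrite H; ring.
Qed.

Lemma eqT1_frac_self u : eqT1 u (frac u).
Proof. exists (Int_part u); unfold frac; ring. Qed.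

Lemma dT1_small u v d : dT1 u v < d -> d <= / 2 -> exists h k, u = v + h + IZR k /\ Rabs h < d.
Proof.
  intros H Hd. unfold dT1 in H. pose proof (frac_range (u - v)). pose proof (frac_decomp (u - v)).
  set (f := frac (u - v)) in *. set (n := Int_part (u - v)) in *.
  unfold Rmin in H. destruct Rle_dec.
  - exists f, n. split; [lra|]. rewrite Rabs_right; lra.
  - exists (f - 1), (n + 1)%Z. split; [rewrite plus_IZR; simpl; lra|]. rewrite Rabs_left; lra.
Qed.

Lemma dT1_le u v h k : u = v + h + IZR k -> dT1 u v <= Rabs h.
Proof.
  intros E. unfold dT1. replace (u - v) with (h + IZR k) by lra. rewrite frac_shift.
  pose proof (frac_range h). pose proof (Rle_abs h). pose proof (Rle_abs (- h)).
  rewrite Rabs_Ropp in *.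
  destruct (Rlt_dec (Rabs h) 1).
  - destruct (Rle_dec 0 h).
    + rewrite frac_id by lra. eapply Rle_trans; [apply Rmin_l | lra].
    + rewrite (frac_of_decomp h (-1) (h + 1)) by (simpl; lra).
      eapply Rle_trans; [apply Rmin_r | lra].
  - unfold Rmin; destruct Rle_dec; lra.
Qed.

Lemma frac_near s h : 0 <= s < 1 -> Rabs h < / 2 ->
  (frac (s + h) = s + h /\ 0 <= s + h < 1) \/ (frac (s + h) = s + h + 1 /\ s + h < 0) \/
  (frac (s + h) = s + h - 1 /\ 1 <= s + h).
Proof.
  intros Hs Hh. apply Rabs_lt_between in Hh.
  destruct (Rlt_dec (s + h) 0); [right; left; split; [apply (frac_of_decomp _ (-1)); simpl|]; lra|].
  destruct (Rlt_dec (s + h) 1); [left; split; [apply frac_id|]; lra|].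
  right; right. split; [apply (frac_of_decomp _ 1); simpl|]; lra.
Qed.

(** * Arcs and their overlaps *)

(* [arc_cdf M] is the primitive vanishing at 0 of the indicator of the 1-periodic set
   U_k [k, k + M], so the arc [c, c + M] meets the arc [a, a + L] in a set of measure
   [arc_cdf M (a + L - c) - arc_cdf M (a - c)]. *)
Definition arc_cdf (M w : R) : R := M * IZR (Int_part w) + Rmin (frac w) M.

Lemma arc_cdf_shift M w k : arc_cdf M (w + IZR k) = arc_cdf M w + IZR k * M.
Proof. unfold arc_cdf. rewrite Int_part_shift, frac_shift, plus_IZR. ring. Qed.

Lemma arc_cdf_step M w d : 0 <= M <= 1 -> 0 <= d <= 1 ->
  0 <= arc_cdf M (w + d) - arc_cdf M w <= Rmin d M.
Proof.
  intros HM Hd. unfold arc_cdf.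
  pose proof (frac_range w) as Hf. pose proof (frac_decomp w) as Ew.
  set (n := Int_part w) in *. set (f := frac w) in *.
  destruct (Rlt_dec (f + d) 1) as [H|H].
  - rewrite (Int_part_of_decomp (w + d) n (f + d)), (frac_of_decomp (w + d) n (f + d)) by lra.
    unfold Rmin; repeat destruct Rle_dec; lra.
  - rewrite (Int_part_of_decomp (w + d) (n + 1) (f + d - 1)),
      (frac_of_decomp (w + d) (n + 1) (f + d - 1)) by (rewrite ?plus_IZR; simpl; lra).
    rewrite plus_IZR; simpl. unfold Rmin; repeat destruct Rle_dec; lra.
Qed.

Lemma arc_cdf_mono M w w' : 0 <= M <= 1 -> w <= w' -> arc_cdf M w <= arc_cdf M w'.
Proof.
  intros HM Hw.
  assert (Hsteps : forall (n : nat) v v', v <= v' <= v + INR n -> arc_cdf M v <= arc_cdf M v').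
  { induction n as [|n IH]; intros v v' Hv.
    - simpl in Hv. replace v' with (v + 0) by lra.
      pose proof (arc_cdf_step M v 0 HM ltac:(lra)); lra.
    - rewrite S_INR in Hv. destruct (Rle_dec v' (v + 1)).
      + replace v' with (v + (v' - v)) by ring.
        pose proof (arc_cdf_step M v (v' - v) HM ltac:(lra)); lra.
      + pose proof (arc_cdf_step M v 1 HM ltac:(lra)).
        pose proof (IH (v + 1) v' ltac:(lra)). lra. }
  destruct (INR_unbounded (w' - w)) as [n Hn]. apply (Hsteps n); lra.
Qed.

Lemma arc_cdf_reflect M w : 0 <= M <= 1 -> arc_cdf M (M - w) + arc_cdf M w = M.
Proof.
  intros HM. unfold arc_cdf.
  pose proof (frac_range w) as Hf. pose proof (frac_decomp w) as Ew.
  set (n := Int_part w) in *. set (f := frac w) in *.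
  destruct (Rle_dec f M) as [H1|H1]; [destruct (Rlt_dec (M - f) 1) as [H2|H2]|].
  - rewrite (Int_part_of_decomp (M - w) (-n) (M - f)), (frac_of_decomp (M - w) (-n) (M - f))
      by (rewrite ?opp_IZR; lra).
    rewrite opp_IZR. unfold Rmin; repeat destruct Rle_dec; lra.
  - rewrite (Int_part_of_decomp (M - w) (1 - n) 0), (frac_of_decomp (M - w) (1 - n) 0)
      by (rewrite ?minus_IZR; simpl; lra).
    rewrite minus_IZR; simpl. unfold Rmin; repeat destruct Rle_dec; lra.
  - rewrite (Int_part_of_decomp (M - w) (- n - 1) (M - f + 1)),
      (frac_of_decomp (M - w) (- n - 1) (M - f + 1)) by (rewrite ?minus_IZR, ?opp_IZR; simpl; lra).
    rewrite minus_IZR, opp_IZR; simpl. unfold Rmin; repeat destruct Rle_dec; lra.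
Qed.

Lemma arc_cdf_full w : arc_cdf 1 w = w.
Proof.
  unfold arc_cdf. pose proof (frac_range w).
  rewrite Rmin_left by lra. unfold frac; ring.
Qed.

Lemma arc_cdf_lipschitz_width M M' w : 0 <= M -> 0 <= M' ->
  Rabs (arc_cdf M w - arc_cdf M' w) <= Rabs (M - M') * (Rabs w + 2).
Proof.
  intros HM HM'. unfold arc_cdf.
  assert (Hn : Rabs (IZR (Int_part w)) <= Rabs w + 1).
  { pose proof (Int_part_bounds w). pose proof (Rle_abs w). pose proof (Rle_abs (- w)).
    rewrite Rabs_Ropp in *. apply Rabs_le. lra. }
  set (n := IZR (Int_part w)) in *.
  assert (Hmin : Rabs (Rmin (frac w) M - Rmin (frac w) M') <= Rabs (M - M')).
  { apply Rabs_le. pose proof (Rle_abs (M - M')). pose proof (Rle_abs (- (M - M'))).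
    rewrite Rabs_Ropp in *. unfold Rmin; repeat destruct Rle_dec; lra. }
  replace (M * n + Rmin (frac w) M - (M' * n + Rmin (frac w) M')) with
    ((M - M') * n + (Rmin (frac w) M - Rmin (frac w) M')) by ring.
  eapply Rle_trans; [apply Rabs_triang|]. rewrite Rabs_mult.
  pose proof (Rabs_pos (M - M')).
  assert (Rabs (M - M') * Rabs n <= Rabs (M - M') * (Rabs w + 1))
    by (apply Rmult_le_compat_l; lra).
  lra.
Qed.

Lemma arc_cdf_lipschitz M w w' : 0 <= M <= 1 -> Rabs (w' - w) <= 1 ->
  Rabs (arc_cdf M w' - arc_cdf M w) <= Rabs (w' - w).
Proof.
  intros HM H. apply Rabs_le_between in H.
  destruct (Rle_dec w w').
  - pose proof (arc_cdf_step M w (w' - w) HM ltac:(lra)).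
    replace (w + (w' - w)) with w' in H0 by ring. pose proof (Rmin_l (w' - w) M).
    rewrite (Rabs_right (w' - w)) by lra. apply Rabs_le; lra.
  - pose proof (arc_cdf_step M w' (w - w') HM ltac:(lra)).
    replace (w' + (w - w')) with w in H0 by ring. pose proof (Rmin_l (w - w') M).
    rewrite (Rabs_left (w' - w)) by lra. apply Rabs_le; lra.
Qed.

Lemma arc_overlap_reduced w L M : -1 < w < 1 -> 0 <= L <= 1 -> 0 <= M <= 1 ->
  ilen w (w + L) (-2) (-2 + M) + ilen w (w + L) (-1) (-1 + M) + ilen w (w + L) 0 (0 + M) +
  ilen w (w + L) 1 (1 + M) + ilen w (w + L) 2 (2 + M) = arc_cdf M (w + L) - arc_cdf M w.
Proof.
  intros Hw HL HM. unfold ilen.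
  assert (E2 : Rmax 0 (Rmin (w + L) (-2 + M) - Rmax w (-2)) = 0)
    by (unfold Rmax, Rmin; repeat destruct Rle_dec; lra).
  assert (E3 : Rmax 0 (Rmin (w + L) (2 + M) - Rmax w 2) = 0)
    by (unfold Rmax, Rmin; repeat destruct Rle_dec; lra).
  rewrite E2, E3. unfold arc_cdf.
  destruct (Rlt_dec w 0); [| destruct (Rlt_dec (w + L) 1)];
    [destruct (Rlt_dec (w + L) 0) | |].
  - rewrite (Int_part_of_decomp w (-1) (w + 1)), (frac_of_decomp w (-1) (w + 1)),
      (Int_part_of_decomp (w + L) (-1) (w + L + 1)), (frac_of_decomp (w + L) (-1) (w + L + 1))
      by (simpl; lra).
    simpl. unfold Rmax, Rmin; repeat destruct Rle_dec; lra.
  - rewrite (Int_part_of_decomp w (-1) (w + 1)), (frac_of_decomp w (-1) (w + 1)),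
      (Int_part_of_decomp (w + L) 0 (w + L)), (frac_of_decomp (w + L) 0 (w + L)) by (simpl; lra).
    simpl. unfold Rmax, Rmin; repeat destruct Rle_dec; lra.
  - rewrite (Int_part_of_decomp w 0 w), (frac_of_decomp w 0 w),
      (Int_part_of_decomp (w + L) 0 (w + L)), (frac_of_decomp (w + L) 0 (w + L)) by (simpl; lra).
    simpl. unfold Rmax, Rmin; repeat destruct Rle_dec; lra.
  - rewrite (Int_part_of_decomp w 0 w), (frac_of_decomp w 0 w),
      (Int_part_of_decomp (w + L) 1 (w + L - 1)), (frac_of_decomp (w + L) 1 (w + L - 1))
      by (simpl; lra).
    simpl. unfold Rmax, Rmin; repeat destruct Rle_dec; lra.
Qed.

Lemma ilen_translate a b c d t : ilen (a + t) (b + t) (c + t) (d + t) = ilen a b c d.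
Proof.
  unfold ilen. f_equal.
  replace (Rmin (b + t) (d + t)) with (Rmin b d + t)
    by (unfold Rmin; repeat destruct Rle_dec; lra).
  replace (Rmax (a + t) (c + t)) with (Rmax a c + t)
    by (unfold Rmax; repeat destruct Rle_dec; lra).
  ring.
Qed.

Lemma arc_overlap_cdf a L c M : 0 <= L <= 1 -> 0 <= M <= 1 ->
  arc_overlap a L c M = arc_cdf M (a + L - c) - arc_cdf M (a - c).
Proof.
  intros HL HM. unfold arc_overlap.
  pose proof (frac_range a). pose proof (frac_range c).
  set (a' := frac a). set (c' := frac c). set (w := a' - c').
  assert (Hk : forall k, ilen a' (a' + L) (c' + k) (c' + k + M) = ilen w (w + L) k (k + M)).
  { intro k. rewrite <- (ilen_translate w (w + L) k (k + M) c'). unfold w. f_equal; ring. }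
  replace (c' - 2) with (c' + -2) by ring. replace (c' - 1) with (c' + -1) by ring.
  replace c' with (c' + 0) at 5 6 by ring.
  rewrite !Hk, arc_overlap_reduced by (unfold w, a', c' in *; lra).
  replace (a + L - c) with ((w + L) + IZR (Int_part a - Int_part c))
    by (unfold w, a', c', frac; rewrite minus_IZR; ring).
  replace (a - c) with (w + IZR (Int_part a - Int_part c))
    by (unfold w, a', c', frac; rewrite minus_IZR; ring).
  rewrite !arc_cdf_shift. ring.
Qed.

Lemma arc_overlap_mirror a L c M : 0 <= L <= 1 -> 0 <= M <= 1 ->
  arc_overlap (1 - a - L) L c M = arc_cdf M (a - (1 - c - M) + L) - arc_cdf M (a - (1 - c - M)).
Proof.
  intros HL HM. rewrite arc_overlap_cdf by auto.
  pose proof (arc_cdf_reflect M (1 - a - L - c) HM). pose proof (arc_cdf_reflect M (1 - a - c) HM).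
  replace (a - (1 - c - M) + L) with (M - (1 - a - L - c)) by ring.
  replace (a - (1 - c - M)) with (M - (1 - a - c)) by ring.
  replace (1 - a - L + L - c) with (1 - a - c) by ring. lra.
Qed.

(** * Uniform laws on arcs *)

(* The uniform probability on the arc [c, c + M] (the Dirac mass at c when M = 0),
   evaluated on the arc [a, a + L]. *)
Definition unif_arc (c M a L : R) : R :=
  if Rlt_dec 0 M then (arc_cdf M (a - c + L) - arc_cdf M (a - c)) / M else dirac c a L.

Definition atomless_at (c M a : R) : Prop := 0 < M \/ frac (c - a) <> 0.

Lemma unif_arc_pos c M a L : 0 < M ->
  unif_arc c M a L = (arc_cdf M (a - c + L) - arc_cdf M (a - c)) / M.
Proof. intro H. unfold unif_arc. destruct Rlt_dec; [reflexivity | lra]. Qed.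

Lemma unif_arc_dirac c M a L : ~ 0 < M ->
  unif_arc c M a L = if Rle_dec (frac (c - a)) L then 1 else 0.
Proof. intro H. unfold unif_arc. destruct Rlt_dec; [lra | reflexivity]. Qed.

Lemma unif_arc_normalize c M a L : unif_arc c M a L = unif_arc (frac (c - a)) M 0 L.
Proof.
  destruct (Rlt_dec 0 M).
  - rewrite !unif_arc_pos by auto. f_equal.
    set (k := (- Int_part (c - a))%Z).
    replace (a - c + L) with ((0 - frac (c - a) + L) + IZR k)
      by (unfold k; rewrite opp_IZR; unfold frac; ring).
    replace (a - c) with ((0 - frac (c - a)) + IZR k)
      by (unfold k; rewrite opp_IZR; unfold frac; ring).
    rewrite !arc_cdf_shift. ring.
  - rewrite !unif_arc_dirac by auto.
    rewrite Rminus_0_r, (frac_id (frac (c - a))) by apply frac_range. reflexivity.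
Qed.

Lemma unif_arc_eqT1 c c' M a a' L : eqT1 c c' -> eqT1 a a' ->
  unif_arc c M a L = unif_arc c' M a' L.
Proof.
  intros [k Hk] [l Hl]. rewrite (unif_arc_normalize c), (unif_arc_normalize c'). f_equal.
  subst. replace (c' + IZR k - (a' + IZR l)) with ((c' - a') + IZR (k - l))
    by (rewrite minus_IZR; ring).
  apply frac_shift.
Qed.

Lemma unif_arc_range c M a L : 0 <= M <= 1 -> 0 <= L <= 1 -> 0 <= unif_arc c M a L <= 1.
Proof.
  intros HM HL. destruct (Rlt_dec 0 M).
  - rewrite unif_arc_pos by auto.
    pose proof (arc_cdf_step M (a - c) L ltac:(lra) HL). pose proof (Rmin_r L M).
    split.
    + apply Rdiv_le_0_compat; lra.
    + apply Rle_div_l; lra.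
  - rewrite unif_arc_dirac by auto. destruct Rle_dec; lra.
Qed.

Lemma unif_arc_mono c M a L L' : 0 <= M <= 1 -> L <= L' ->
  unif_arc c M a L <= unif_arc c M a L'.
Proof.
  intros HM HLL. destruct (Rlt_dec 0 M).
  - rewrite !unif_arc_pos by auto. apply Rmult_le_compat_r.
    + left; apply Rinv_0_lt_compat; lra.
    + pose proof (arc_cdf_mono M (a - c + L) (a - c + L') ltac:(lra) ltac:(lra)). lra.
  - rewrite !unif_arc_dirac by auto. repeat destruct Rle_dec; lra.
Qed.

Lemma unif_arc_full c M a : 0 <= M <= 1 -> unif_arc c M a 1 = 1.
Proof.
  intros HM. destruct (Rlt_dec 0 M).
  - rewrite unif_arc_pos by auto. change 1 with (IZR 1) at 1.
    rewrite arc_cdf_shift. simpl. field. lra.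
  - rewrite unif_arc_dirac by auto. pose proof (frac_range (c - a)). destruct Rle_dec; lra.
Qed.

Lemma unif_arc_empty c M a : 0 <= M <= 1 -> atomless_at c M a -> unif_arc c M a 0 = 0.
Proof.
  intros HM HA. destruct (Rlt_dec 0 M).
  - rewrite unif_arc_pos by auto. rewrite Rplus_0_r. field; lra.
  - destruct HA as [|HA]; [lra|].
    rewrite unif_arc_dirac by auto. pose proof (frac_range (c - a)). destruct Rle_dec; lra.
Qed.

Lemma arc_cdf_covering M g L : 0 < M <= 1 -> 0 <= g < 1 -> g + M <= L <= 1 ->
  arc_cdf M (- g + L) - arc_cdf M (- g) = M.
Proof.
  intros HM Hg HL. unfold arc_cdf.
  destruct (Req_dec g 0) as [->|Hg0].
  - rewrite Ropp_0, Rplus_0_l, (Int_part_of_decomp 0 0 0), (frac_of_decomp 0 0 0) by (simpl; lra).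
    destruct (Rlt_dec L 1).
    + rewrite (Int_part_of_decomp L 0 L), (frac_of_decomp L 0 L) by (simpl; lra).
      simpl. unfold Rmin; repeat destruct Rle_dec; lra.
    + rewrite (Int_part_of_decomp L 1 0), (frac_of_decomp L 1 0) by (simpl; lra).
      simpl. unfold Rmin; repeat destruct Rle_dec; lra.
  - rewrite (Int_part_of_decomp (- g) (-1) (1 - g)), (frac_of_decomp (- g) (-1) (1 - g))
      by (simpl; lra).
    destruct (Rlt_dec (- g + L) 1).
    + rewrite (Int_part_of_decomp (- g + L) 0 (- g + L)), (frac_of_decomp (- g + L) 0 (- g + L))
        by (simpl; lra).
      simpl. unfold Rmin; repeat destruct Rle_dec; lra.
    + rewrite (Int_part_of_decomp (- g + L) 1 0), (frac_of_decomp (- g + L) 1 0) by (simpl; lra).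
      simpl. unfold Rmin; repeat destruct Rle_dec; lra.
Qed.

Lemma arc_cdf_missing M g L : 0 < M <= 1 -> L < g < 1 -> 0 <= L -> g + M <= 1 ->
  arc_cdf M (- g + L) - arc_cdf M (- g) = 0.
Proof.
  intros HM Hg HL HgM. unfold arc_cdf.
  rewrite (Int_part_of_decomp (- g) (-1) (1 - g)), (frac_of_decomp (- g) (-1) (1 - g)),
    (Int_part_of_decomp (- g + L) (-1) (1 + L - g)), (frac_of_decomp (- g + L) (-1) (1 + L - g))
    by (simpl; lra).
  simpl. unfold Rmin; repeat destruct Rle_dec; lra.
Qed.

Lemma unif_arc_covering c M a L : 0 <= M <= 1 -> frac (c - a) + M <= L <= 1 ->
  unif_arc c M a L = 1.
Proof.
  intros HM HL. rewrite unif_arc_normalize. pose proof (frac_range (c - a)).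
  destruct (Rlt_dec 0 M).
  - rewrite unif_arc_pos by auto. rewrite Rminus_0_l, arc_cdf_covering by lra. field. lra.
  - rewrite unif_arc_dirac by auto. rewrite Rminus_0_r, (frac_id (frac (c - a))) by lra.
    destruct Rle_dec; lra.
Qed.

Lemma unif_arc_missing c M a L : 0 <= M <= 1 -> 0 <= L < frac (c - a) ->
  frac (c - a) + M <= 1 -> unif_arc c M a L = 0.
Proof.
  intros HM HL HgM. rewrite unif_arc_normalize. pose proof (frac_range (c - a)).
  destruct (Rlt_dec 0 M).
  - rewrite unif_arc_pos by auto. rewrite Rminus_0_l, arc_cdf_missing by lra. field. lra.
  - rewrite unif_arc_dirac by auto. rewrite Rminus_0_r, (frac_id (frac (c - a))) by lra.
    destruct Rle_dec; lra.
Qed.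

Lemma frac_sub_frac u a x : frac (u - (a + x)) = frac (frac (u - a) - x).
Proof.
  replace (u - (a + x)) with ((frac (u - a) - x) + IZR (Int_part (u - a))) by (unfold frac; ring).
  apply frac_shift.
Qed.

Lemma frac_sub_cases f x : 0 <= f < 1 -> 0 <= x <= 1 ->
  (x <= f -> frac (f - x) = f - x) /\ (f < x -> frac (f - x) = f - x + 1).
Proof.
  intros Hf Hx; split; intro H.
  - apply frac_id; lra.
  - apply (frac_of_decomp _ (-1)); [simpl; ring | lra].
Qed.

Lemma unif_arc_complement c M a L : 0 <= M <= 1 -> 0 <= L <= 1 ->
  1 <= unif_arc c M a L + unif_arc c M (a + L) (1 - L).
Proof.
  intros HM HL. destruct (Rlt_dec 0 M).
  - rewrite !unif_arc_pos by auto.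
    replace (a + L - c + (1 - L)) with ((a - c) + IZR 1) by (simpl; ring).
    rewrite arc_cdf_shift. replace (a + L - c) with (a - c + L) by ring. simpl.
    apply Req_le. field. lra.
  - rewrite !unif_arc_dirac by auto. rewrite frac_sub_frac.
    pose proof (frac_range (c - a)). set (f := frac (c - a)) in *.
    destruct (frac_sub_cases f L H ltac:(lra)) as [E1 E2].
    destruct (Rle_dec f L); [destruct Rle_dec; lra|].
    rewrite E1 by lra. destruct Rle_dec; lra.
Qed.

Lemma unif_arc_disjoint c M a t m1 m2 t2 : 0 <= M <= 1 -> atomless_at c M a ->
  0 <= t -> t < m1 -> m1 < m2 -> m2 < t2 -> t2 <= 1 ->
  unif_arc c M a t + unif_arc c M (a + m1) (m2 - m1) + unif_arc c M (a + t2) (1 - t2) <= 1.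
Proof.
  intros HM HA H1 H2 H3 H4 H5. destruct (Rlt_dec 0 M).
  - rewrite !unif_arc_pos by auto.
    replace (a + m1 - c + (m2 - m1)) with (a - c + m2) by ring.
    replace (a + t2 - c + (1 - t2)) with ((a - c) + IZR 1) by (simpl; ring).
    replace (a + m1 - c) with (a - c + m1) by ring.
    replace (a + t2 - c) with (a - c + t2) by ring.
    rewrite arc_cdf_shift. simpl.
    pose proof (arc_cdf_mono M (a - c + t) (a - c + m1) ltac:(lra) ltac:(lra)).
    pose proof (arc_cdf_mono M (a - c + m2) (a - c + t2) ltac:(lra) ltac:(lra)).
    unfold Rdiv. rewrite <- !Rmult_plus_distr_r.
    apply (Rmult_le_reg_r M); [lra|]. rewrite Rmult_assoc, Rinv_l; lra.
  - destruct HA as [|HA]; [lra|].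
    rewrite !unif_arc_dirac by auto. rewrite !frac_sub_frac.
    pose proof (frac_range (c - a)). set (f := frac (c - a)) in *.
    destruct (frac_sub_cases f m1 H ltac:(lra)) as [E1 E2].
    destruct (frac_sub_cases f t2 H ltac:(lra)) as [E3 E4].
    destruct (Rle_dec m1 f); [destruct (Rle_dec t2 f)|].
    + rewrite E1, E3 by lra. repeat destruct Rle_dec; lra.
    + rewrite E1, E4 by lra. repeat destruct Rle_dec; lra.
    + rewrite E2, E4 by lra. repeat destruct Rle_dec; lra.
Qed.

Lemma unif_arc_reflect c M a L : 0 <= M <= 1 -> 0 <= L <= 1 ->
  unif_arc (1 - c - M) M (- a) L = unif_arc c M (a - L) L.
Proof.
  intros HM HL. destruct (Rlt_dec 0 M).
  - rewrite !unif_arc_pos by auto.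
    replace (- a - (1 - c - M) + L) with ((M - (a - c - L)) + IZR (-1)) by (simpl; ring).
    replace (- a - (1 - c - M)) with ((M - (a - c)) + IZR (-1)) by (simpl; ring).
    rewrite !arc_cdf_shift.
    pose proof (arc_cdf_reflect M (a - c - L) ltac:(lra)).
    pose proof (arc_cdf_reflect M (a - c) ltac:(lra)).
    replace (a - L - c + L) with (a - c) by ring. replace (a - L - c) with (a - c - L) by ring.
    f_equal. lra.
  - rewrite !unif_arc_dirac by auto.
    pose proof (frac_range (c - a)). pose proof (frac_decomp (c - a)).
    set (f := frac (c - a)) in *. set (k := Int_part (c - a)) in *.
    replace (c - (a - L)) with ((f + L) + IZR k) by lra. rewrite frac_shift.
    replace (1 - c - M - - a) with ((1 - f) + IZR (- k)) by (rewrite opp_IZR; lra).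
    rewrite frac_shift.
    destruct (Req_dec f 0) as [E|E].
    + rewrite E, Rplus_0_l, Rminus_0_r, (frac_of_decomp 1 1 0) by (simpl; lra).
      destruct (Rlt_dec L 1).
      * rewrite frac_id by lra. repeat destruct Rle_dec; lra.
      * rewrite (frac_of_decomp L 1 0) by (simpl; lra). repeat destruct Rle_dec; lra.
    + rewrite (frac_id (1 - f)) by lra.
      destruct (Rlt_dec (f + L) 1).
      * rewrite frac_id by lra. repeat destruct Rle_dec; lra.
      * rewrite (frac_of_decomp (f + L) 1 (f + L - 1)) by (simpl; lra).
        repeat destruct Rle_dec; lra.
Qed.

Lemma unif_arc_lipschitz c M a L L' : 0 < M <= 1 -> 0 <= L -> L <= L' -> L' <= 1 ->
  unif_arc c M a L' - unif_arc c M a L <= (L' - L) / M.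
Proof.
  intros HM H1 H2 H3. rewrite !unif_arc_pos by lra.
  pose proof (arc_cdf_step M (a - c + L) (L' - L) ltac:(lra) ltac:(lra)).
  replace (a - c + L + (L' - L)) with (a - c + L') in H by ring.
  pose proof (Rmin_l (L' - L) M).
  unfold Rdiv. rewrite <- Rmult_minus_distr_r. apply Rmult_le_compat_r.
  - left; apply Rinv_0_lt_compat; lra.
  - lra.
Qed.

Lemma unif_arc_right_continuous c M a L e : 0 <= M <= 1 -> 0 <= L < 1 -> 0 < e ->
  exists d, 0 < d /\ forall L', L <= L' < L + d -> L' <= 1 ->
    unif_arc c M a L' <= unif_arc c M a L + e.
Proof.
  intros HM HL He. destruct (Rlt_dec 0 M).
  - exists (e * M). split; [apply Rmult_lt_0_compat; lra|]. intros L' H1 H2.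
    pose proof (unif_arc_lipschitz c M a L L' ltac:(lra) ltac:(lra) ltac:(lra) H2).
    assert ((L' - L) / M <= e) by (apply Rle_div_l; lra). lra.
  - destruct (Rle_dec (frac (c - a)) L).
    + exists 1. split; [lra|]. intros L' H1 H2.
      rewrite (unif_arc_dirac _ _ _ L) by auto. destruct Rle_dec; [|lra].
      pose proof (unif_arc_range c M a L' ltac:(lra) ltac:(lra)). lra.
    + exists (frac (c - a) - L). split; [lra|]. intros L' H1 H2.
      rewrite !unif_arc_dirac by auto. repeat destruct Rle_dec; lra.
Qed.

Lemma unif_arc_continuous c M a L e : 0 < M <= 1 -> 0 <= L <= 1 -> 0 < e ->
  exists d, 0 < d /\ forall L', 0 <= L' <= 1 -> Rabs (L' - L) < d ->
     Rabs (unif_arc c M a L' - unif_arc c M a L) <= e.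
Proof.
  intros HM HL He. exists (e * M). split; [apply Rmult_lt_0_compat; lra|].
  intros L' H1 H2. apply Rabs_lt_between in H2.
  assert (Hstep : forall u v, 0 <= u -> u <= v -> v <= 1 -> v - u < e * M ->
             0 <= unif_arc c M a v - unif_arc c M a u <= e).
  { intros u v Hu Huv Hv Hd.
    pose proof (unif_arc_lipschitz c M a u v HM Hu Huv Hv).
    assert ((v - u) / M <= e) by (apply Rle_div_l; lra).
    pose proof (unif_arc_mono c M a u v ltac:(lra) Huv). lra. }
  apply Rabs_le_between. destruct (Rle_dec L L').
  - pose proof (Hstep L L' ltac:(lra) r ltac:(lra) ltac:(lra)). lra.
  - pose proof (Hstep L' L ltac:(lra) ltac:(lra) ltac:(lra) ltac:(lra)). lra.
Qed.

Lemma arc_cdf_increment_close M M' w w' L g : 0 <= M <= 1 -> 0 <= M' <= 1 -> 0 <= L <= 1 ->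
  2 * g <= 1 -> Rabs (w' - w) <= 2 * g -> Rabs (M' - M) <= g ->
  Rabs ((arc_cdf M' (w' + L) - arc_cdf M' w') - (arc_cdf M (w + L) - arc_cdf M w))
    <= g * (2 * Rabs w + 9).
Proof.
  intros HM HM' HL Hg Hww HMM. pose proof (Rabs_pos (w' - w)).
  assert (A1 : Rabs (arc_cdf M' (w' + L) - arc_cdf M' (w + L)) <= 2 * g).
  { eapply Rle_trans; [apply arc_cdf_lipschitz|]; replace (w' + L - (w + L)) with (w' - w) by ring;
      lra. }
  assert (A2 : Rabs (arc_cdf M' (w + L) - arc_cdf M (w + L)) <= g * (Rabs w + 3)).
  { eapply Rle_trans; [apply arc_cdf_lipschitz_width; lra|].
    pose proof (Rabs_triang w L). rewrite (Rabs_right L) in H0 by lra.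
    pose proof (Rabs_pos (w + L)). pose proof (Rabs_pos (M' - M)).
    apply Rle_trans with (g * (Rabs (w + L) + 2)).
    - apply Rmult_le_compat_r; lra.
    - apply Rmult_le_compat_l; lra. }
  assert (A3 : Rabs (arc_cdf M' w' - arc_cdf M' w) <= 2 * g)
    by (eapply Rle_trans; [apply arc_cdf_lipschitz; lra | lra]).
  assert (A4 : Rabs (arc_cdf M' w - arc_cdf M w) <= g * (Rabs w + 2)).
  { eapply Rle_trans; [apply arc_cdf_lipschitz_width; lra|].
    pose proof (Rabs_pos w). apply Rmult_le_compat_r; lra. }
  apply Rabs_le_between in A1, A2, A3, A4. apply Rabs_le. lra.
Qed.

Lemma unif_arc_continuous_params c M a L e : 0 < M <= 1 -> 0 <= L <= 1 -> 0 < e ->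
  exists g, 0 < g /\ forall c' M' a', Rabs (c' - c) < g -> Rabs (M' - M) < g ->
    Rabs (a' - a) < g -> M' <= 1 ->
    Rabs (unif_arc c' M' a' L - unif_arc c M a L) <= e.
Proof.
  intros HM HL He.
  set (w := a - c). set (K := 2 * Rabs w + 9).
  assert (HK : 0 < K) by (pose proof (Rabs_pos w); unfold K; lra).
  set (g := Rmin (M / 2) (e * (M * M) / (2 * (K + 1)))).
  assert (Hg1 : g <= M / 2) by apply Rmin_l.
  assert (Hg2 : g <= e * (M * M) / (2 * (K + 1))) by apply Rmin_r.
  assert (Hg0 : 0 < g).
  { apply Rmin_pos; [lra|]. apply Rdiv_lt_0_compat; [|lra].
    apply Rmult_lt_0_compat; [lra|]. nra. }
  exists g. split; [exact Hg0|]. intros c' M' a' H1 H2 H3 H4.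
  apply Rabs_lt_between in H1, H2, H3.
  set (w' := a' - c').
  rewrite !unif_arc_pos by lra. fold w w'.
  set (N := arc_cdf M (w + L) - arc_cdf M w).
  set (N' := arc_cdf M' (w' + L) - arc_cdf M' w').
  assert (HN : 0 <= N <= M)
    by (pose proof (arc_cdf_step M w L ltac:(lra) HL); pose proof (Rmin_r L M); unfold N; lra).
  pose proof (arc_cdf_increment_close M M' w w' L g ltac:(lra) ltac:(lra) HL ltac:(lra)
    ltac:(apply Rabs_le; unfold w, w'; lra) ltac:(apply Rabs_le; lra)) as HNN.
  fold N N' K in HNN. apply Rabs_le_between in HNN.
  (* [N' / M' - N / M = (N' M - N M') / (M M')], and the numerator is [O(g)] *)
  assert (Hkey : - (g * (K + 1)) <= N' * M - N * M' <= g * (K + 1)).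
  { replace (N' * M - N * M') with ((N' - N) * M + N * (M - M')) by ring. nra. }
  assert (Hg3 : g * (K + 1) <= e * (M * M')).
  { apply Rle_trans with (e * (M * M) / 2).
    - apply Rle_trans with (e * (M * M) / (2 * (K + 1)) * (K + 1)).
      + apply Rmult_le_compat_r; lra.
      + right; field; lra.
    - replace (e * (M * M) / 2) with ((e * M) * (M / 2)) by field.
      replace (e * (M * M')) with ((e * M) * M') by ring.
      apply Rmult_le_compat_l; [nra | lra]. }
  assert (Hp : 0 < M * M') by nra.
  replace (N' / M' - N / M) with ((N' * M - N * M') / (M * M')) by (field; lra).
  apply Rabs_le. split.
  - apply (Rmult_le_reg_r (M * M')); [lra|]. unfold Rdiv. rewrite Rmult_assoc, Rinv_l by lra. lra.
  - apply Rle_div_l; lra.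
Qed.

Lemma unif_arc_continuous_params_widened c M a L d e : 0 <= M <= 1 -> 0 <= L -> L + d <= 1 ->
  0 < d -> 0 < e -> atomless_at c M a ->
  exists g, 0 < g /\ forall c' M' a', Rabs (c' - c) < g -> Rabs (M' - M) < g ->
    Rabs (a' - a) < g -> 0 <= M' <= 1 ->
    unif_arc c M a L - e <= unif_arc c' M' a' (L + d) /\
    unif_arc c' M' a' L <= unif_arc c M a (L + d) + e.
Proof.
  intros HM HL HLd Hd He HA. destruct (Rlt_dec 0 M).
  - destruct (unif_arc_continuous_params c M a L e ltac:(lra) ltac:(lra) He) as [g [Hg H]].
    exists g. split; [auto|]. intros c' M' a' H1 H2 H3 H4.
    pose proof (H c' M' a' H1 H2 H3 ltac:(lra)) as HH. apply Rabs_le_between in HH.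
    pose proof (unif_arc_mono c' M' a' L (L + d) H4 ltac:(lra)).
    pose proof (unif_arc_mono c M a L (L + d) HM ltac:(lra)).
    lra.
  - destruct HA as [|HA]; [lra|].
    pose proof (frac_range (c - a)). pose proof (frac_decomp (c - a)).
    set (f := frac (c - a)) in *. set (k := Int_part (c - a)) in *.
    set (g := Rmin (Rmin (f / 2) ((1 - f) / 3)) (d / 3)).
    assert (g <= f / 2 /\ g <= (1 - f) / 3 /\ g <= d / 3) as [G1 [G2 G3]]
      by (unfold g, Rmin; repeat destruct Rle_dec; lra).
    assert (G0 : 0 < g) by (unfold g; repeat apply Rmin_pos; lra).
    exists g. split; [auto|]. intros c' M' a' H1 H2 H3 H4.
    apply Rabs_lt_between in H1, H2, H3.
    assert (Ef : frac (c' - a') = f + ((c' - c) - (a' - a)))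
      by (apply (frac_of_decomp (c' - a') k); lra).
    rewrite !(unif_arc_dirac c M a) by auto. fold f.
    pose proof (unif_arc_range c' M' a' L H4 ltac:(lra)).
    pose proof (unif_arc_range c' M' a' (L + d) H4 ltac:(lra)).
    destruct (Rle_dec f L).
    + rewrite (unif_arc_covering c' M' a' (L + d)) by lra.
      repeat destruct Rle_dec; lra.
    + destruct (Rle_dec f (L + d)); [lra|].
      rewrite (unif_arc_missing c' M' a' L) by lra. lra.
Qed.

(** * Geometrically weighted sums *)

Lemma is_series_Rscal c a l : is_series a l -> is_series (fun n => c * a n) (c * l).
Proof. exact (@is_series_scal R_AbsRing R_NormedModule c a l). Qed.

Lemma is_series_Rplus a b la lb : is_series a la -> is_series b lb ->
  is_series (fun n => a n + b n) (la + lb).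
Proof. exact (@is_series_plus R_AbsRing R_NormedModule a b la lb). Qed.

Definition wsum (g : nat -> R) : R := series_sum (fun n => (/ 2) ^ (n + 1) * g n).

Definition bounded_by (g : nat -> R) (B : R) : Prop := forall n, 0 <= g n <= B.

Lemma half_pow_pos n : 0 < (/ 2) ^ (n + 1).
Proof. apply pow_lt. lra. Qed.

Lemma is_series_half_pow : is_series (fun n => (/ 2) ^ (n + 1)) 1.
Proof.
  assert (H := is_series_geom (/ 2) ltac:(rewrite Rabs_right; lra)).
  apply (is_series_Rscal (/ 2)) in H.
  replace 1 with (/ 2 * / (1 - / 2)) by field.
  eapply is_series_ext; [|apply H].
  intro n. rewrite pow_add. simpl. ring.
Qed.

Lemma series_sum_unique a l : is_series a l -> series_sum a = l.
Proof.
  intros H. unfold series_sum. apply is_series_Reals in H.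
  apply (uniqueness_sum a); auto.
  exact (epsilon_spec (inhabits 0) (fun l => infinite_sum a l) (ex_intro _ l H)).
Qed.

Lemma is_series_wsum g B : bounded_by g B -> is_series (fun n => (/ 2) ^ (n + 1) * g n) (wsum g).
Proof.
  intros Hg.
  assert (E : ex_series (fun n => (/ 2) ^ (n + 1) * g n)).
  { apply (@ex_series_le R_AbsRing R_CompleteNormedModule _ (fun n => B * (/ 2) ^ (n + 1))).
    - intro n. change (norm ((/ 2) ^ (n + 1) * g n)) with (Rabs ((/ 2) ^ (n + 1) * g n)).
      specialize (Hg n). pose proof (half_pow_pos n).
      rewrite Rabs_right by nra. nra.
    - exists (B * 1). apply is_series_Rscal, is_series_half_pow. }
  apply Series_correct in E. unfold wsum. rewrite (series_sum_unique _ _ E). exact E.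
Qed.

Lemma wsum_ext g h : (forall n, g n = h n) -> wsum g = wsum h.
Proof.
  intros E. unfold wsum. f_equal. apply functional_extensionality. intro n. rewrite E. reflexivity.
Qed.

Lemma wsum_const c : 0 <= c -> wsum (fun _ => c) = c.
Proof.
  intros Hc. unfold wsum. apply series_sum_unique.
  pose proof (is_series_Rscal c _ _ is_series_half_pow) as H. rewrite Rmult_1_r in H.
  eapply is_series_ext; [|exact H]. intro; simpl; ring.
Qed.

Lemma wsum_unroll g B : bounded_by g B -> wsum g = / 2 * g 0%nat + / 2 * wsum (fun k => g (S k)).
Proof.
  intros Hg. pose proof (is_series_wsum g B Hg) as H.
  assert (Hg' : bounded_by (fun k => g (S k)) B) by (intro; apply Hg).
  pose proof (is_series_Rscal (/ 2) _ _ (is_series_wsum _ B Hg')) as H'.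
  assert (H2 : is_series (fun k => (/ 2) ^ (S k + 1) * g (S k)) (wsum g - / 2 * g 0%nat)).
  { apply (@is_series_incr_1 R_AbsRing R_NormedModule (fun n => (/ 2) ^ (n + 1) * g n)).
    match goal with |- is_series _ ?l => replace l with (wsum g) end; [exact H|].
    unfold plus; simpl. ring. }
  assert (H3 : is_series (fun k => (/ 2) ^ (S k + 1) * g (S k)) (/ 2 * wsum (fun k => g (S k)))).
  { eapply is_series_ext; [|exact H']. intro n. simpl. ring. }
  pose proof (is_series_unique _ _ H2). pose proof (is_series_unique _ _ H3). lra.
Qed.

Lemma wsum_le g h B : bounded_by h B -> (forall n, 0 <= g n <= h n) -> wsum g <= wsum h.
Proof.
  intros Hh Hgh.
  assert (Hg : bounded_by g B) by (intro n; specialize (Hgh n); specialize (Hh n); lra).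
  rewrite <- (is_series_unique _ _ (is_series_wsum g B Hg)),
    <- (is_series_unique _ _ (is_series_wsum h B Hh)).
  apply Series_le.
  - intro n. specialize (Hgh n). pose proof (half_pow_pos n). split; [nra|].
    apply Rmult_le_compat_l; lra.
  - exists (wsum h). apply (is_series_wsum h B Hh).
Qed.

Lemma wsum_plus g h B C : bounded_by g B -> bounded_by h C ->
  wsum (fun n => g n + h n) = wsum g + wsum h.
Proof.
  intros Hg Hh.
  pose proof (is_series_Rplus _ _ _ _ (is_series_wsum g B Hg) (is_series_wsum h C Hh)) as H.
  unfold wsum at 1. apply series_sum_unique. eapply is_series_ext; [|exact H].
  intro; simpl; ring.
Qed.

Lemma wsum_range g : bounded_by g 1 -> 0 <= wsum g <= 1.
Proof.
  intros Hg. rewrite <- (wsum_const 0), <- (wsum_const 1) by lra. split.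
  - apply (wsum_le _ _ 1); [exact Hg | intro n; specialize (Hg n); lra].
  - apply (wsum_le _ _ 1); [intro; lra | intro n; specialize (Hg n); lra].
Qed.

Lemma wsum_le_head N : forall g h e, bounded_by g 1 -> bounded_by h 1 -> 0 <= e ->
  (forall n, (n <= N)%nat -> g n <= h n + e) -> wsum g <= wsum h + e + (/ 2) ^ (N + 1).
Proof.
  induction N as [|N IH]; intros g h e Hg Hh He H;
    rewrite (wsum_unroll g 1 Hg), (wsum_unroll h 1 Hh).
  - pose proof (wsum_range (fun k => g (S k)) (fun n => Hg (S n))).
    pose proof (wsum_range (fun k => h (S k)) (fun n => Hh (S n))).
    specialize (H 0%nat (le_n 0)). simpl. lra.
  - pose proof (IH (fun k => g (S k)) (fun k => h (S k)) e (fun n => Hg (S n)) (fun n => Hh (S n))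
      He (fun n Hn => H (S n) ltac:(lia))).
    pose proof (H 0%nat ltac:(lia)).
    replace ((/ 2) ^ (S N + 1)) with (/ 2 * (/ 2) ^ (N + 1)) by (simpl; ring).
    lra.
Qed.

Lemma half_pow_small e : 0 < e -> exists N, (/ 2) ^ (N + 1) < e.
Proof.
  intros He. destruct (pow_lt_1_zero (/ 2) ltac:(rewrite Rabs_right; lra) e He) as [N HN].
  exists N. specialize (HN (N + 1)%nat ltac:(lia)). rewrite Rabs_right in HN; [lra|].
  left; apply pow_lt; lra.
Qed.

Lemma common_delta (P : nat -> R -> Prop) N :
  (forall n d d', 0 < d' <= d -> P n d -> P n d') ->
  (forall n, (n <= N)%nat -> exists d, 0 < d /\ P n d) ->
  exists d, 0 < d /\ forall n, (n <= N)%nat -> P n d.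
Proof.
  intros Hmono. induction N as [|N IH]; intros H.
  - destruct (H 0%nat (le_n 0)) as [d [Hd Pd]]. exists d. split; auto.
    intros n Hn. replace n with 0%nat by lia. auto.
  - destruct IH as [d1 [Hd1 P1]]; [intros n Hn; apply H; lia|].
    destruct (H (S N) (le_n _)) as [d2 [Hd2 P2]].
    exists (Rmin d1 d2). split; [apply Rmin_pos; auto|].
    intros n Hn. destruct (Nat.eq_dec n (S N)) as [->|Hne].
    + apply (Hmono _ d2); auto. split; [apply Rmin_pos; auto | apply Rmin_r].
    + apply (Hmono _ d1); [split; [apply Rmin_pos; auto | apply Rmin_l]|]. apply P1. lia.
Qed.

(** * Quantile functions *)

Record steep_cdf (F : R -> R) : Prop := {
  steep_slope : forall L L', 0 <= L -> L <= L' -> L' <= 1 -> (L' - L) / 2 <= F L' - F L;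
  steep_one : F 1 = 1;
  steep_zero : 0 <= F 0;
  steep_right_continuous : forall L e, 0 <= L < 1 -> 0 < e ->
    exists d, 0 < d /\ forall L', L <= L' < L + d -> L' <= 1 -> F L' <= F L + e }.

Definition continuous_on_01 (F : R -> R) : Prop :=
  forall L e, 0 <= L <= 1 -> 0 < e -> exists d, 0 < d /\
    forall L', 0 <= L' <= 1 -> Rabs (L' - L) < d -> Rabs (F L' - F L) <= e.

Definition is_quantile (F : R -> R) (y t : R) : Prop :=
  0 <= t <= 1 /\ y <= F t /\ forall t', 0 <= t' <= 1 -> y <= F t' -> t <= t'.

Definition quantile (F : R -> R) (y : R) : R := epsilon (inhabits 0) (is_quantile F y).

Section Quantile.

Variable F : R -> R.
Hypothesis HF : steep_cdf F.

Lemma steep_cdf_mono L L' : 0 <= L -> L <= L' -> L' <= 1 -> F L <= F L'.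
Proof. intros H1 H2 H3. pose proof (steep_slope F HF L L' H1 H2 H3). lra. Qed.

Lemma is_quantile_unique y t t' : is_quantile F y t -> is_quantile F y t' -> t = t'.
Proof.
  intros [Ht [Ht1 Ht2]] [Ht' [Ht'1 Ht'2]].
  specialize (Ht2 t' Ht' Ht'1). specialize (Ht'2 t Ht Ht1). lra.
Qed.

(* The infimum of [{t | y <= F t}] is attained by right continuity. *)
Lemma quantile_exists y : y <= 1 -> exists t, is_quantile F y t.
Proof.
  intros Hy. destruct HF as [_ H1 _ Hrc].
  set (E := fun z => 0 <= - z <= 1 /\ y <= F (- z)).
  assert (Hb : bound E) by (exists 0; intros z [Hz _]; lra).
  assert (He : exists z, E z)
    by (exists (-1); unfold E; replace (- -1) with 1 by ring; rewrite H1; lra).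
  destruct (completeness E Hb He) as [l [Hub Hlub]].
  set (m := - l).
  assert (Hlow : forall z, 0 <= z <= 1 -> y <= F z -> m <= z).
  { intros z Hz Hyz. assert (E (- z)) by (unfold E; rewrite Ropp_involutive; auto).
    specialize (Hub _ H). unfold m; lra. }
  assert (Hglb : forall b, (forall z, 0 <= z <= 1 -> y <= F z -> b <= z) -> b <= m).
  { intros b Hb'. assert (is_upper_bound E (- b)).
    { intros z [Hz Hyz]. specialize (Hb' _ Hz Hyz). lra. }
    specialize (Hlub _ H). unfold m; lra. }
  assert (Hm1 : m <= 1) by (apply Hlow; [lra | rewrite H1; auto]).
  assert (Hm0 : 0 <= m) by (apply Hglb; intros; lra).
  exists m. split; [lra|]. split; [|exact Hlow].
  destruct (Req_dec m 1) as [E1|E1]; [rewrite E1, H1; auto|].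
  destruct (Rle_dec y (F m)) as [|Hn]; auto. exfalso.
  destruct (Hrc m ((y - F m) / 2) ltac:(lra) ltac:(lra)) as [d [Hd Hd']].
  set (b := m + Rmin d (1 - m) / 2).
  assert (Hmin : 0 < Rmin d (1 - m)) by (apply Rmin_pos; lra).
  pose proof (Rmin_l d (1 - m)). pose proof (Rmin_r d (1 - m)).
  assert (b <= m).
  { apply Hglb. intros z Hz Hyz. destruct (Rlt_dec z b); [|lra].
    destruct (Rlt_dec z m).
    - specialize (Hlow z Hz Hyz). lra.
    - specialize (Hd' z ltac:(unfold b in *; lra) ltac:(lra)). lra. }
  unfold b in *; lra.
Qed.

Lemma quantile_correct y : y <= 1 -> is_quantile F y (quantile F y).
Proof. intros Hy. unfold quantile. apply epsilon_spec, quantile_exists, Hy. Qed.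

Lemma quantile_range y : y <= 1 -> 0 <= quantile F y <= 1.
Proof. intros Hy. apply (quantile_correct y Hy). Qed.

Lemma below_quantile y t : y <= 1 -> 0 <= t <= 1 -> t < quantile F y -> F t < y.
Proof.
  intros Hy Ht Hlt. destruct (quantile_correct y Hy) as [_ [_ Hmin]].
  destruct (Rlt_dec (F t) y); auto. specialize (Hmin t Ht ltac:(lra)). lra.
Qed.

Lemma quantile_of_value t : 0 <= t <= 1 -> quantile F (F t) = t.
Proof.
  intros Ht.
  assert (Hy : F t <= 1) by (rewrite <- (steep_one F HF); apply steep_cdf_mono; lra).
  destruct (quantile_correct (F t) Hy) as [Hr [Hge Hmin]].
  specialize (Hmin t Ht ltac:(lra)).
  destruct (Req_dec (quantile F (F t)) t); auto.
  pose proof (steep_slope F HF (quantile F (F t)) t ltac:(lra) Hmin ltac:(lra)). lra.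
Qed.

Lemma quantile_zero : quantile F 0 = 0.
Proof.
  destruct (quantile_correct 0 ltac:(lra)) as [Hr [_ Hmin]].
  specialize (Hmin 0 ltac:(lra) (steep_zero F HF)). lra.
Qed.

Lemma quantile_one : quantile F 1 = 1.
Proof. rewrite <- (steep_one F HF) at 1. apply quantile_of_value. lra. Qed.

Hypothesis HF0 : F 0 = 0.
Hypothesis HFc : continuous_on_01 F.

Lemma value_of_quantile y : 0 <= y <= 1 -> F (quantile F y) = y.
Proof.
  intros Hy. destruct (quantile_correct y ltac:(lra)) as [Hr [Hge Hmin]].
  set (t := quantile F y) in *.
  destruct (Req_dec t 0) as [E|E]; [rewrite E in *; lra|].
  apply Rle_antisym; auto. apply Rnot_lt_le. intro Hlt.
  destruct (HFc t ((F t - y) / 2) Hr ltac:(lra)) as [d [Hd Hd']].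
  set (t' := t - Rmin d t / 2).
  assert (0 < Rmin d t) by (apply Rmin_pos; lra).
  pose proof (Rmin_l d t). pose proof (Rmin_r d t).
  assert (Ht' : 0 <= t' <= 1) by (unfold t'; lra).
  pose proof (below_quantile y t' ltac:(lra) Ht' ltac:(change (t' < t); unfold t'; lra)).
  assert (Habs : Rabs (t' - t) < d)
    by (apply Rabs_lt_between; unfold t'; lra).
  specialize (Hd' t' Ht' Habs). apply Rabs_le_between in Hd'. lra.
Qed.

Lemma quantile_strict_mono y y' : 0 <= y -> y < y' -> y' <= 1 -> quantile F y < quantile F y'.
Proof.
  intros H1 H2 H3.
  pose proof (value_of_quantile y ltac:(lra)). pose proof (value_of_quantile y' ltac:(lra)).
  pose proof (quantile_range y ltac:(lra)). pose proof (quantile_range y' ltac:(lra)).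
  destruct (Rlt_dec (quantile F y) (quantile F y')); auto.
  pose proof (steep_cdf_mono (quantile F y') (quantile F y) ltac:(lra) ltac:(lra) ltac:(lra)).
  lra.
Qed.

End Quantile.

(* Continuity in the parameter [x], but only up to a widening [d] of the argument; this is
   what survives at atoms of the fibre measures. *)
Definition widened_continuous (Ff : R -> R -> R) : Prop :=
  forall x L d e, 0 <= L -> L + d <= 1 -> 0 < d -> 0 < e ->
  exists rho, 0 < rho /\ forall h, Rabs h < rho ->
    Ff x L - e <= Ff (x + h) (L + d) /\ Ff (x + h) L <= Ff x (L + d) + e.

Section QuantileFamily.

Variable Ff : R -> R -> R.
Hypothesis HF : forall x, steep_cdf (Ff x).
Hypothesis HW : widened_continuous Ff.

Lemma quantile_family_upper x s eps : 0 <= s <= 1 -> 0 < eps ->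
  exists rho, 0 < rho /\ forall h s', Rabs h < rho -> 0 <= s' <= 1 -> Rabs (s' - s) < rho ->
    quantile (Ff (x + h)) s' < quantile (Ff x) s + eps.
Proof.
  intros Hs He.
  destruct (quantile_correct (Ff x) (HF x) s ltac:(lra)) as [Hr [Hge Hmin]].
  set (t := quantile (Ff x) s) in *.
  destruct (Rle_dec (t + eps / 2) 1).
  - destruct (HW x t (eps / 4) (eps / 16) ltac:(lra) ltac:(lra) ltac:(lra) ltac:(lra))
      as [rho [Hrho HH]].
    exists (Rmin rho (eps / 16)). split; [apply Rmin_pos; lra|].
    intros h s' Hh Hs' Hss.
    pose proof (Rmin_l rho (eps / 16)). pose proof (Rmin_r rho (eps / 16)).
    apply Rabs_lt_between in Hss.
    destruct (HH h ltac:(lra)) as [A _].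
    pose proof (steep_slope _ (HF (x + h)) (t + eps / 4) (t + eps / 2) ltac:(lra) ltac:(lra) r).
    destruct (quantile_correct (Ff (x + h)) (HF _) s' ltac:(lra)) as [_ [_ Hmin']].
    specialize (Hmin' (t + eps / 2) ltac:(lra) ltac:(lra)). lra.
  - exists 1. split; [lra|]. intros h s' _ Hs' _.
    pose proof (quantile_range (Ff (x + h)) (HF _) s' ltac:(lra)). lra.
Qed.

Lemma quantile_family_lower x s eps : 0 <= s <= 1 -> 0 < eps ->
  exists rho, 0 < rho /\ forall h s', Rabs h < rho -> 0 <= s' <= 1 -> Rabs (s' - s) < rho ->
    quantile (Ff x) s - eps < quantile (Ff (x + h)) s'.
Proof.
  intros Hs He.
  destruct (quantile_correct (Ff x) (HF x) s ltac:(lra)) as [Hr [Hge Hmin]].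
  set (t := quantile (Ff x) s) in *.
  destruct (Rle_dec 0 (t - eps)).
  - destruct (HW x (t - eps) (eps / 2) (eps / 16) ltac:(lra) ltac:(lra) ltac:(lra) ltac:(lra))
      as [rho [Hrho HH]].
    exists (Rmin rho (eps / 16)). split; [apply Rmin_pos; lra|].
    intros h s' Hh Hs' Hss.
    pose proof (Rmin_l rho (eps / 16)). pose proof (Rmin_r rho (eps / 16)).
    apply Rabs_lt_between in Hss.
    destruct (HH h ltac:(lra)) as [_ A].
    replace (t - eps + eps / 2) with (t - eps / 2) in A by field.
    pose proof (steep_slope _ (HF x) (t - eps / 2) (t - eps / 4) ltac:(lra) ltac:(lra) ltac:(lra)).
    pose proof (below_quantile (Ff x) (HF x) s (t - eps / 4) ltac:(lra) ltac:(lra)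
      ltac:(change (t - eps / 4 < t); lra)).
    destruct (quantile_correct (Ff (x + h)) (HF _) s' ltac:(lra)) as [Hr' [Hge' _]].
    destruct (Rlt_dec (t - eps) (quantile (Ff (x + h)) s')); auto.
    pose proof (steep_cdf_mono (Ff (x + h)) (HF _) (quantile (Ff (x + h)) s') (t - eps)
      ltac:(lra) ltac:(lra) ltac:(lra)).
    lra.
  - exists 1. split; [lra|]. intros h s' _ Hs' _.
    pose proof (quantile_range (Ff (x + h)) (HF _) s' ltac:(lra)). lra.
Qed.

Lemma quantile_family_continuous x s eps : 0 <= s <= 1 -> 0 < eps ->
  exists rho, 0 < rho /\ forall h s', Rabs h < rho -> 0 <= s' <= 1 -> Rabs (s' - s) < rho ->
    Rabs (quantile (Ff (x + h)) s' - quantile (Ff x) s) < eps.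
Proof.
  intros Hs He.
  destruct (quantile_family_upper x s eps Hs He) as [r1 [Hr1 H1]].
  destruct (quantile_family_lower x s eps Hs He) as [r2 [Hr2 H2]].
  exists (Rmin r1 r2). split; [apply Rmin_pos; lra|].
  intros h s' Hh Hs' Hss. pose proof (Rmin_l r1 r2). pose proof (Rmin_r r1 r2).
  specialize (H1 h s' ltac:(lra) Hs' ltac:(lra)). specialize (H2 h s' ltac:(lra) Hs' ltac:(lra)).
  apply Rabs_lt_between. lra.
Qed.

(* When [s + h] leaves [0, 1) the height wraps around the fibre, and the comparison goes
   through [quantile (Ff x) 0 = 0] or [quantile (Ff x) 1 = 1]. *)
Lemma quantile_family_circle_continuous x s eps : 0 <= s < 1 -> 0 < eps ->
  exists rho, 0 < rho /\ forall h h2, Rabs h < rho -> Rabs h2 < rho ->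
    dT1 (quantile (Ff (x + h)) (frac (s + h2))) (quantile (Ff x) s) < eps.
Proof.
  intros Hs He.
  destruct (quantile_family_continuous x s (eps / 2) ltac:(lra) ltac:(lra)) as [r1 [Hr1 C1]].
  destruct (quantile_family_continuous x 0 (eps / 2) ltac:(lra) ltac:(lra)) as [r0 [Hr0 C0]].
  destruct (quantile_family_continuous x 1 (eps / 2) ltac:(lra) ltac:(lra)) as [r2 [Hr2 C2]].
  set (rho := Rmin (Rmin r1 r0) (Rmin r2 (/ 4))).
  assert (rho <= r1 /\ rho <= r0 /\ rho <= r2 /\ rho <= / 4) as [D1 [D2 [D3 D4]]]
    by (unfold rho, Rmin; repeat destruct Rle_dec; lra).
  exists rho. split; [unfold rho; repeat apply Rmin_pos; lra|]. intros h h2 Hh Hh2.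
  pose proof (C0 0) as C00. pose proof (C2 0) as C20. rewrite Rplus_0_r in C00, C20.
  specialize (C0 h). specialize (C1 h). specialize (C2 h).
  set (F := Ff x) in *. set (G := Ff (x + h)) in *.
  assert (T0 : quantile F 0 = 0) by apply (quantile_zero _ (HF x)).
  assert (T1 : quantile F 1 = 1) by apply (quantile_one _ (HF x)).
  apply Rabs_lt_between in Hh2.
  destruct (frac_near s h2 Hs ltac:(apply Rabs_lt_between; lra))
    as [[E1 R1]|[[E1 R1]|[E1 R1]]]; rewrite E1.
  - specialize (C1 (s + h2) ltac:(lra) ltac:(lra) ltac:(apply Rabs_lt_between; lra)).
    eapply Rle_lt_trans; [apply (dT1_le _ _ (quantile G (s + h2) - quantile F s) 0); simpl; ring|].
    lra.
  - specialize (C2 (s + h2 + 1) ltac:(lra) ltac:(lra) ltac:(apply Rabs_lt_between; lra)).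
    specialize (C00 s ltac:(rewrite Rabs_R0; lra) ltac:(lra) ltac:(apply Rabs_lt_between; lra)).
    apply Rabs_lt_between in C2, C00.
    eapply Rle_lt_trans;
      [apply (dT1_le _ _ (quantile G (s + h2 + 1) - quantile F s - 1) 1); simpl; ring|].
    apply Rabs_lt_between. lra.
  - specialize (C0 (s + h2 - 1) ltac:(lra) ltac:(lra) ltac:(apply Rabs_lt_between; lra)).
    specialize (C20 s ltac:(rewrite Rabs_R0; lra) ltac:(lra) ltac:(apply Rabs_lt_between; lra)).
    apply Rabs_lt_between in C0, C20.
    eapply Rle_lt_trans;
      [apply (dT1_le _ _ (quantile G (s + h2 - 1) - quantile F s + 1) (-1)); simpl; ring|].
    apply Rabs_lt_between. lra.
Qed.

End QuantileFamily.

(** * Pointwise continuity *)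

Definition cont_at (f : R -> R) (x : R) : Prop :=
  forall e, 0 < e -> exists d, 0 < d /\ forall y, Rabs (y - x) < d -> Rabs (f y - f x) < e.

Lemma cont_at_of_continuity_pt f x : continuity_pt f x -> cont_at f x.
Proof.
  intros H e He. destruct (H e He) as [d [Hd Hx]]. exists d. split; [lra|].
  intros y Hy. destruct (Req_dec y x) as [->|Hne].
  - rewrite Rminus_diag, Rabs_R0; lra.
  - apply (Hx y). split; [split; [exact I | auto] | exact Hy].
Qed.

Lemma cont_at_const c x : cont_at (fun _ => c) x.
Proof. intros e He. exists 1. split; [lra|]. intros. rewrite Rminus_diag, Rabs_R0; lra. Qed.

Lemma cont_at_ext f g x : (forall y, f y = g y) -> cont_at f x -> cont_at g x.
Proof.
  intros E H e He. destruct (H e He) as [d [Hd H']]. exists d; split; auto.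
  intros y Hy. rewrite <- !E. auto.
Qed.

Lemma cont_at_plus f g x : cont_at f x -> cont_at g x -> cont_at (fun y => f y + g y) x.
Proof.
  intros Hf Hg e He. destruct (Hf (e / 2) ltac:(lra)) as [d1 [Hd1 H1]].
  destruct (Hg (e / 2) ltac:(lra)) as [d2 [Hd2 H2]].
  exists (Rmin d1 d2). split; [apply Rmin_pos; lra|]. intros y Hy.
  pose proof (Rmin_l d1 d2). pose proof (Rmin_r d1 d2).
  specialize (H1 y ltac:(lra)). specialize (H2 y ltac:(lra)).
  apply Rabs_lt_between in H1, H2. apply Rabs_lt_between. lra.
Qed.

Lemma cont_at_opp f x : cont_at f x -> cont_at (fun y => - f y) x.
Proof.
  intros Hf e He. destruct (Hf e He) as [d [Hd H]]. exists d. split; auto.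
  intros y Hy. specialize (H y Hy). apply Rabs_lt_between in H. apply Rabs_lt_between. lra.
Qed.

Lemma cont_at_Rmin f g x : cont_at f x -> cont_at g x -> cont_at (fun y => Rmin (f y) (g y)) x.
Proof.
  intros Hf Hg e He. destruct (Hf e He) as [d1 [Hd1 H1]]. destruct (Hg e He) as [d2 [Hd2 H2]].
  exists (Rmin d1 d2). split; [apply Rmin_pos; lra|]. intros y Hy.
  pose proof (Rmin_l d1 d2). pose proof (Rmin_r d1 d2).
  specialize (H1 y ltac:(lra)). specialize (H2 y ltac:(lra)).
  apply Rabs_lt_between in H1, H2. apply Rabs_lt_between.
  unfold Rmin; repeat destruct Rle_dec; lra.
Qed.

Lemma cont_at_Rabs f x : cont_at f x -> cont_at (fun y => Rabs (f y)) x.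
Proof.
  intros Hf e He. destruct (Hf e He) as [d [Hd H]]. exists d. split; auto.
  intros y Hy. specialize (H y Hy). eapply Rle_lt_trans; [apply Rabs_triang_inv2 | exact H].
Qed.

Lemma cont_at_shift f c x : cont_at f (x + c) -> cont_at (fun y => f (y + c)) x.
Proof.
  intros Hf e He. destruct (Hf e He) as [d [Hd H]]. exists d. split; auto.
  intros y Hy. apply H. replace (y + c - (x + c)) with (y - x) by ring. auto.
Qed.

Definition clamp (a b v : R) : R := Rmax a (Rmin v b).

Lemma clamp_range a b v : a <= b -> a <= clamp a b v <= b.
Proof. intros; unfold clamp, Rmax, Rmin; repeat destruct Rle_dec; lra. Qed.

Lemma cont_at_clamp (f : R -> R) a b x : a <= b -> continuous_on_interval f a b ->
  cont_at (fun y => f (clamp a b y)) x.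
Proof.
  intros Hab Hc e He.
  destruct (Hc _ (clamp_range a b x Hab) e He) as [d [Hd H]]. exists d. split; auto.
  intros y Hy. apply H; [apply clamp_range; auto|].
  eapply Rle_lt_trans; [|exact Hy].
  apply Rabs_le. pose proof (Rle_abs (y - x)). pose proof (Rle_abs (- (y - x))).
  rewrite Rabs_Ropp in *. unfold clamp, Rmax, Rmin; repeat destruct Rle_dec; lra.
Qed.

Lemma cont_at_ssum al r n x : continuity r -> cont_at (ssum al r n) x.
Proof.
  intros Hr. induction n as [|n IH]; [apply cont_at_const|].
  simpl. apply cont_at_plus; auto.
  apply (cont_at_shift r (INR n * al) x), cont_at_of_continuity_pt, Hr.
Qed.

Lemma cont_at_frac_comp (g : R -> R) u e : (forall v, cont_at g v) -> g 0 = g 1 -> 0 < e ->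
  exists d, 0 < d /\ forall h, Rabs h < d -> Rabs (g (frac (u + h)) - g (frac u)) < e.
Proof.
  intros Hg H01 He. pose proof (frac_range u) as Hr. pose proof (frac_decomp u) as Eu.
  set (v := frac u) in *. set (n := Int_part u) in *.
  destruct (Req_dec v 0) as [E|E].
  - destruct (Hg 0 e He) as [d0 [Hd0 H0]]. destruct (Hg 1 e He) as [d1 [Hd1 H1]].
    set (d := Rmin (Rmin d0 d1) (/ 2)).
    assert (d <= d0 /\ d <= d1 /\ d <= / 2) as [R1 [R2 R3]]
      by (unfold d, Rmin; repeat destruct Rle_dec; lra).
    exists d. split; [unfold d; repeat apply Rmin_pos; lra|].
    intros h Hh. apply Rabs_lt_between in Hh as Hh'.
    rewrite E. destruct (Rle_dec 0 h).
    + rewrite (frac_of_decomp (u + h) n h) by lra. apply H0. rewrite Rminus_0_r. lra.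
    + rewrite (frac_of_decomp (u + h) (n - 1) (1 + h)) by (rewrite ?minus_IZR; simpl; lra).
      rewrite H01. apply H1. replace (1 + h - 1) with h by ring. lra.
  - destruct (Hg v e He) as [d0 [Hd0 H0]].
    set (d := Rmin d0 (Rmin v (1 - v))).
    assert (d <= d0 /\ d <= v /\ d <= 1 - v) as [R1 [R2 R3]]
      by (unfold d, Rmin; repeat destruct Rle_dec; lra).
    exists d. split; [unfold d; repeat apply Rmin_pos; lra|].
    intros h Hh. apply Rabs_lt_between in Hh as Hh'.
    rewrite (frac_of_decomp (u + h) n (v + h)) by lra. apply H0.
    replace (v + h - v) with h by ring. lra.
Qed.

(** * Sums along orbits *)

Lemma ssum_succ_left al r n y : ssum al r (S n) y = r y + ssum al r n (y + al).
Proof.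
  induction n as [|n IH].
  - simpl. rewrite Rmult_0_l, !Rplus_0_r, Rplus_0_l. reflexivity.
  - change (ssum al r (S (S n)) y) with (ssum al r (S n) y + r (y + INR (S n) * al)).
    rewrite IH.
    change (ssum al r (S n) (y + al)) with (ssum al r n (y + al) + r (y + al + INR n * al)).
    rewrite S_INR. replace (y + al + INR n * al) with (y + (INR n + 1) * al) by ring. ring.
Qed.

Lemma ssum_neg_ssum al r n x : ssum_neg al r n x = ssum al r n (x - INR n * al).
Proof.
  induction n as [|n IH]; [reflexivity|].
  change (ssum_neg al r (S n) x) with (ssum_neg al r n x + r (x - INR (S n) * al)).
  rewrite IH, ssum_succ_left, S_INR.
  replace (x - (INR n + 1) * al + al) with (x - INR n * al) by ring.
  ring.
Qed.

Lemma S_iter_neg_snd al r n p :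
  snd (S_iter al r (- Z.of_nat n) p) = snd p - ssum_neg al r n (fst p).
Proof.
  destruct n as [|m]; [simpl; ring|].
  change (- Z.of_nat (S m))%Z with (Zneg (Pos.of_succ_nat m)). simpl.
  rewrite SuccNat2Pos.id_succ. reflexivity.
Qed.

(** * The fibre measures and the map [T] *)

Section Construction.

Variables (al : R) (r : R -> R) (x1 y1 xb1 xb2 : R) (psi phi : R -> R).

Hypothesis Hrc : continuity r.
Hypothesis Hrper : forall x, r (x + 1) = r x.
Hypothesis Hrodd : forall x, r (x + / 2) = - r x.
Hypothesis Hz1 : forall m : Z, ~ eqT1 (snd (S_iter al r m (x1, y1))) 0.
Hypothesis Hz2 : forall m : Z, ~ eqT1 (snd (S_iter al r m (x1 + / 2, 1 - y1))) 0.
Hypothesis Hxb : 0 < xb1 /\ xb1 < x1 /\ x1 < xb2 /\ xb2 < / 2.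
Hypothesis Hpsic : continuous_on_interval psi xb1 xb2.
Hypothesis Hphic : continuous_on_interval phi xb1 xb2.
Hypothesis Hpsir : forall x, xb1 <= x <= xb2 -> 0 <= psi x <= 1.
Hypothesis Hphir : forall x, xb1 <= x <= xb2 -> 0 <= phi x <= 1.
Hypothesis Hpsi1 : psi xb1 = 0.
Hypothesis Hphi1 : phi xb1 = 1.
Hypothesis Hpsi2 : psi xb2 = 1.
Hypothesis Hphi2 : phi xb2 = 0.
Hypothesis Hlt : forall x, xb1 <= x < x1 -> psi x < phi x.
Hypothesis Hgt : forall x, x1 < x <= xb2 -> psi x > phi x.
Hypothesis Heq : psi x1 = phi x1.
Hypothesis Heqy : eqT1 (psi x1) y1.

Definition lens_low (v : R) : R := Rmin (psi (clamp xb1 xb2 v)) (phi (clamp xb1 xb2 v)).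
Definition lens_width (v : R) : R := Rabs (phi (clamp xb1 xb2 v) - psi (clamp xb1 xb2 v)).

(* [mu0] at [u] is the uniform law on the arc [centre u, centre u + width u] (a Dirac
   mass when the width vanishes).  Off [xb1, xb2] the lens is the whole circle (low 0,
   width 1), so one formula covers the lens, its mirror image under [P] and the
   Lebesgue part. *)
Definition centre (u : R) : R :=
  lens_low (frac u) + (1 - lens_low (frac u - / 2) - lens_width (frac u - / 2)).
Definition width (u : R) : R := lens_width (frac u) + lens_width (frac u - / 2) - 1.

Lemma lens_outside v : v <= xb1 \/ xb2 <= v -> lens_low v = 0 /\ lens_width v = 1.
Proof.
  intros Hv. unfold lens_low, lens_width, clamp.
  destruct Hv.
  - replace (Rmax xb1 (Rmin v xb2)) with xb1 by (unfold Rmax, Rmin; repeat destruct Rle_dec; lra).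
    rewrite Hpsi1, Hphi1, Rmin_left, Rabs_right; lra.
  - replace (Rmax xb1 (Rmin v xb2)) with xb2 by (unfold Rmax, Rmin; repeat destruct Rle_dec; lra).
    rewrite Hpsi2, Hphi2, Rmin_right, Rabs_left; lra.
Qed.

Lemma lens_inside v : xb1 <= v <= xb2 ->
  lens_low v = Rmin (psi v) (phi v) /\ lens_width v = Rabs (phi v - psi v).
Proof.
  intros Hv. unfold lens_low, lens_width, clamp.
  replace (Rmax xb1 (Rmin v xb2)) with v by (unfold Rmax, Rmin; repeat destruct Rle_dec; lra).
  auto.
Qed.

Lemma lens_width_range v : 0 <= lens_width v <= 1.
Proof.
  unfold lens_width. pose proof (clamp_range xb1 xb2 v ltac:(lra)) as H.
  pose proof (Hpsir _ H). pose proof (Hphir _ H).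
  unfold Rabs; destruct Rcase_abs; lra.
Qed.

Lemma lens_width_zero v : lens_width v = 0 -> v = x1 /\ lens_low v = psi x1.
Proof.
  intros H0.
  destruct (Rle_dec v xb1); [destruct (lens_outside v ltac:(lra)); lra|].
  destruct (Rle_dec xb2 v); [destruct (lens_outside v ltac:(lra)); lra|].
  destruct (lens_inside v ltac:(lra)) as [El Ew]. rewrite El. rewrite Ew in H0.
  destruct (Rlt_dec v x1); [pose proof (Hlt v ltac:(lra)); rewrite Rabs_right in H0; lra|].
  destruct (Rlt_dec x1 v); [pose proof (Hgt v ltac:(lra)); rewrite Rabs_left in H0; lra|].
  assert (v = x1) by lra. subst v. split; auto. rewrite <- Heq, Rmin_left; lra.
Qed.

Lemma width_range u : 0 <= width u <= 1.
Proof.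
  unfold width. pose proof (frac_range u). set (v := frac u) in *.
  destruct (Rle_dec v (/ 2)).
  - destruct (lens_outside (v - / 2) ltac:(lra)) as [_ ->].
    pose proof (lens_width_range v). lra.
  - destruct (lens_outside v ltac:(lra)) as [_ ->].
    pose proof (lens_width_range (v - / 2)). lra.
Qed.

Lemma centre_width_shift u k : centre (u + IZR k) = centre u /\ width (u + IZR k) = width u.
Proof. unfold centre, width. rewrite frac_shift. auto. Qed.

Lemma centre_width_half u :
  centre (u + / 2) = 1 - centre u - width u /\ width (u + / 2) = width u.
Proof.
  unfold centre, width.
  pose proof (frac_range u) as Hr. pose proof (frac_decomp u) as Eu.
  set (v := frac u) in *. set (n := Int_part u) in *.
  destruct (Rlt_dec v (/ 2)).
  - rewrite (frac_of_decomp (u + / 2) n (v + / 2)) by lra.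
    replace (v + / 2 - / 2) with v by ring.
    destruct (lens_outside (v + / 2) ltac:(lra)) as [-> ->].
    destruct (lens_outside (v - / 2) ltac:(lra)) as [-> ->].
    split; ring.
  - rewrite (frac_of_decomp (u + / 2) (n + 1) (v - / 2)) by (rewrite ?plus_IZR; simpl; lra).
    destruct (lens_outside v ltac:(lra)) as [-> ->].
    destruct (lens_outside (v - / 2 - / 2) ltac:(lra)) as [-> ->].
    split; ring.
Qed.

Lemma width_zero u : width u = 0 ->
  (frac u = x1 /\ centre u = psi x1) \/ (frac u = x1 + / 2 /\ centre u = 1 - psi x1).
Proof.
  intros E. unfold width, centre in *. pose proof (frac_range u). set (v := frac u) in *.
  destruct (Rlt_dec v (/ 2)).
  - destruct (lens_outside (v - / 2) ltac:(lra)) as [E1 E2]. rewrite E1, E2 in *.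
    destruct (lens_width_zero v ltac:(lra)) as [-> E3].
    left. split; auto. rewrite E3. ring.
  - destruct (lens_outside v ltac:(lra)) as [E1 E2]. rewrite E1, E2 in *.
    destruct (lens_width_zero (v - / 2) ltac:(lra)) as [E3 E4].
    right. split; [lra|]. rewrite E4. replace (lens_width (v - / 2)) with 0 by lra. ring.
Qed.

Lemma psi_phi_gap v : xb1 <= v <= xb2 -> v <> x1 -> 0 < Rabs (phi v - psi v).
Proof.
  intros Hv Hne. destruct (Rlt_dec v x1).
  - pose proof (Hlt v ltac:(lra)). rewrite Rabs_right; lra.
  - pose proof (Hgt v ltac:(lra)). rewrite Rabs_left; lra.
Qed.

Lemma mu0_unif_arc u a L : 0 <= L <= 1 ->
  mu0 x1 y1 xb1 xb2 psi phi u a L = unif_arc (centre u) (width u) a L.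
Proof.
  intros HL. unfold mu0, centre, width. cbv zeta.
  pose proof (frac_range u). set (v := frac u) in *.
  destruct (Rlt_dec xb1 v); [destruct (Rlt_dec v xb2)|].
  2, 3: destruct (Rlt_dec (xb1 + / 2) v); [destruct (Rlt_dec v (xb2 + / 2))|].
  - destruct (lens_outside (v - / 2) ltac:(lra)) as [-> ->].
    destruct (lens_inside v ltac:(lra)) as [-> ->].
    replace (Rmin (psi v) (phi v) + (1 - 0 - 1)) with (Rmin (psi v) (phi v)) by ring.
    replace (Rabs (phi v - psi v) + 1 - 1) with (Rabs (phi v - psi v)) by ring.
    destruct (Req_EM_T v x1) as [E|E].
    + rewrite unif_arc_dirac by (rewrite E, Heq, Rminus_diag, Rabs_R0; lra).
      unfold dirac. rewrite E, <- Heq, Rmin_left by lra.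
      rewrite (eqT1_frac (psi x1 - a) (y1 - a)); [reflexivity|].
      destruct Heqy as [k Hk]. exists k. lra.
    + pose proof (psi_phi_gap v ltac:(lra) E).
      pose proof (Hpsir v ltac:(lra)). pose proof (Hphir v ltac:(lra)).
      assert (0 <= Rabs (phi v - psi v) <= 1) by (unfold Rabs; destruct Rcase_abs; lra).
      rewrite unif_arc_pos by lra. f_equal.
      rewrite arc_overlap_cdf by auto.
      f_equal; f_equal; ring.
  (* the second lens is the mirror image of the first *)
  - destruct (lens_outside v ltac:(lra)) as [-> ->].
    set (w := v - / 2).
    destruct (lens_inside w ltac:(unfold w; lra)) as [-> ->].
    pose proof (Hpsir w ltac:(unfold w; lra)). pose proof (Hphir w ltac:(unfold w; lra)).
    destruct (Req_EM_T w x1) as [E|E].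
    + rewrite unif_arc_dirac by (rewrite E, Heq, Rminus_diag, Rabs_R0; lra).
      unfold dirac. rewrite E, <- Heq, Rminus_diag, Rabs_R0, Rmin_left by lra.
      rewrite (eqT1_frac (0 + (1 - psi x1 - 0) - a) (1 - y1 - a)); [reflexivity|].
      destruct Heqy as [k Hk]. exists (- k)%Z. rewrite opp_IZR. lra.
    + pose proof (psi_phi_gap w ltac:(unfold w; lra) E).
      set (c := Rmin (psi w) (phi w)) in *. set (M := Rabs (phi w - psi w)) in *.
      assert (HM : 0 <= M <= 1) by (unfold M, Rabs; destruct Rcase_abs; lra).
      replace (1 + M - 1) with M by ring.
      rewrite unif_arc_pos by lra. f_equal. rewrite Rplus_0_l. apply arc_overlap_mirror; auto.
  all: try (exfalso; lra).
  all: destruct (lens_outside v ltac:(lra)) as [-> ->];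
       destruct (lens_outside (v - / 2) ltac:(lra)) as [-> ->].
  all: replace (0 + (1 - 0 - 1)) with 0 by ring; replace (1 + 1 - 1) with 1 by ring;
       rewrite unif_arc_pos, !arc_cdf_full by lra; field.
Qed.

Lemma cont_at_lens_low v : cont_at lens_low v.
Proof. unfold lens_low. apply cont_at_Rmin; apply cont_at_clamp; auto; lra. Qed.

Lemma cont_at_lens_width v : cont_at lens_width v.
Proof.
  unfold lens_width. apply cont_at_Rabs, cont_at_plus; [|apply cont_at_opp];
    apply cont_at_clamp; auto; lra.
Qed.

Lemma centre_width_continuous u e : 0 < e ->
  exists d, 0 < d /\ forall h, Rabs h < d ->
    Rabs (centre (u + h) - centre u) < e /\ Rabs (width (u + h) - width u) < e.
Proof.
  intros He.
  set (C v := lens_low v + (1 - lens_low (v - / 2) - lens_width (v - / 2))).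
  set (W v := lens_width v + lens_width (v - / 2) - 1).
  assert (HC : forall v, cont_at C v).
  { intro v. apply cont_at_plus; [apply cont_at_lens_low|].
    apply (cont_at_ext (fun y => 1 + (- lens_low (y + - / 2) + - lens_width (y + - / 2))));
      [intro y; unfold Rminus; ring|].
    apply cont_at_plus; [apply cont_at_const|].
    apply cont_at_plus; apply cont_at_opp, (cont_at_shift _ (- / 2));
      [apply cont_at_lens_low | apply cont_at_lens_width]. }
  assert (HW : forall v, cont_at W v).
  { intro v. apply (cont_at_ext (fun y => lens_width y + (lens_width (y + - / 2) + -1)));
      [intro y; unfold W, Rminus; ring|].
    apply cont_at_plus; [apply cont_at_lens_width|].
    apply cont_at_plus; [|apply cont_at_const].
    apply (cont_at_shift _ (- / 2)), cont_at_lens_width. }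
  assert (C0 : C 0 = C 1 /\ W 0 = W 1).
  { unfold C, W.
    destruct (lens_outside 0 ltac:(lra)) as [-> ->].
    destruct (lens_outside 1 ltac:(lra)) as [-> ->].
    destruct (lens_outside (0 - / 2) ltac:(lra)) as [-> ->].
    destruct (lens_outside (1 - / 2) ltac:(lra)) as [-> ->].
    split; ring. }
  destruct (cont_at_frac_comp C u e HC (proj1 C0) He) as [d1 [Hd1 H1]].
  destruct (cont_at_frac_comp W u e HW (proj2 C0) He) as [d2 [Hd2 H2]].
  exists (Rmin d1 d2). split; [apply Rmin_pos; lra|]. intros h Hh.
  pose proof (Rmin_l d1 d2). pose proof (Rmin_r d1 d2).
  split; [apply H1 | apply H2]; lra.
Qed.

(* The fibre measure of the arc [a, a + L]: with [mu0] in the form [unif_arc], the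
   [n]-th term is the [mu^n_x]-measure and [arc_mass] the [mu_x]-measure of that arc. *)
Definition fibre_term (x a L : R) (n : nat) : R :=
  unif_arc (centre (x + INR n * al)) (width (x + INR n * al)) (ssum al r n x + a) L.

Definition arc_mass (x a L : R) : R := / 2 * (L + wsum (fibre_term x a L)).

Definition fibre_cdf (x : R) : R -> R := arc_mass x 0.

Lemma mu_fibre_cdf x L : 0 <= L <= 1 -> mu al r x1 y1 xb1 xb2 psi phi x L = fibre_cdf x L.
Proof.
  intros HL. unfold mu, fibre_cdf, arc_mass, wsum. do 3 f_equal.
  apply functional_extensionality. intro n. unfold mun, fibre_term.
  rewrite Rplus_0_r, mu0_unif_arc by auto. reflexivity.
Qed.

Lemma fibre_term_range x a L : 0 <= L <= 1 -> bounded_by (fibre_term x a L) 1.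
Proof. intros HL n. apply unif_arc_range; auto using width_range. Qed.

Lemma arc_mass_range x a L : 0 <= L <= 1 -> L / 2 <= arc_mass x a L <= (L + 1) / 2.
Proof. intros HL. unfold arc_mass. pose proof (wsum_range _ (fibre_term_range x a L HL)). lra. Qed.

Lemma arc_mass_slope x a L L' : 0 <= L -> L <= L' -> L' <= 1 ->
  (L' - L) / 2 <= arc_mass x a L' - arc_mass x a L.
Proof.
  intros H1 H2 H3. unfold arc_mass.
  assert (wsum (fibre_term x a L) <= wsum (fibre_term x a L')).
  { apply (wsum_le _ _ 1); [apply fibre_term_range; lra|].
    intro n. split; [apply fibre_term_range; lra|].
    apply unif_arc_mono; auto using width_range. }
  lra.
Qed.

Lemma arc_mass_full x a : arc_mass x a 1 = 1.
Proof.
  unfold arc_mass. rewrite (wsum_ext _ (fun _ => 1)).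
  - rewrite wsum_const; lra.
  - intro n. apply unif_arc_full, width_range.
Qed.

Lemma arc_mass_right_continuous x a L e : 0 <= L < 1 -> 0 < e ->
  exists d, 0 < d /\ forall L', L <= L' < L + d -> L' <= 1 -> arc_mass x a L' <= arc_mass x a L + e.
Proof.
  intros HL He.
  destruct (half_pow_small (e / 2) ltac:(lra)) as [N HN].
  destruct (common_delta (fun n d => forall L', L <= L' < L + d -> L' <= 1 ->
     fibre_term x a L' n <= fibre_term x a L n + e / 4) N) as [d [Hd Hall]].
  { intros n d0 d' Hd' P L' H1 H2. apply P; lra. }
  { intros n _. apply unif_arc_right_continuous; auto using width_range; lra. }
  exists (Rmin d (e / 4)). split; [apply Rmin_pos; lra|]. intros L' H1 H2.
  pose proof (Rmin_l d (e / 4)). pose proof (Rmin_r d (e / 4)).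
  pose proof (wsum_le_head N (fibre_term x a L') (fibre_term x a L) (e / 4)
    (fibre_term_range x a L' ltac:(lra)) (fibre_term_range x a L ltac:(lra)) ltac:(lra)
    (fun n Hn => Hall n Hn L' ltac:(lra) H2)).
  unfold arc_mass. lra.
Qed.

Lemma fibre_cdf_steep x : steep_cdf (fibre_cdf x).
Proof.
  unfold fibre_cdf. split.
  - apply arc_mass_slope.
  - apply arc_mass_full.
  - pose proof (arc_mass_range x 0 0 ltac:(lra)). lra.
  - apply arc_mass_right_continuous.
Qed.

Lemma r_shift_int k x : r (x + IZR k) = r x.
Proof.
  assert (Hn : forall n x, r (x + INR n) = r x).
  { induction n as [|n IH]; intro y; [simpl; rewrite Rplus_0_r; auto|].
    rewrite S_INR, <- Rplus_assoc, Hrper. auto. }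
  destruct (Z_le_gt_dec 0 k).
  - rewrite <- (Z2Nat.id k), <- INR_IZR_INZ by auto. apply Hn.
  - rewrite <- (Hn (Z.to_nat (- k)) (x + IZR k)), INR_IZR_INZ, Z2Nat.id, opp_IZR by lia.
    now replace (x + IZR k + - IZR k) with x by ring.
Qed.

Lemma ssum_shift_int n x k : ssum al r n (x + IZR k) = ssum al r n x.
Proof.
  induction n as [|n IH]; simpl; auto.
  rewrite IH. replace (x + IZR k + INR n * al) with ((x + INR n * al) + IZR k) by ring.
  rewrite r_shift_int. auto.
Qed.

Lemma ssum_shift_half n x : ssum al r n (x + / 2) = - ssum al r n x.
Proof.
  induction n as [|n IH]; simpl; [ring|].
  rewrite IH. replace (x + / 2 + INR n * al) with ((x + INR n * al) + / 2) by ring.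
  rewrite Hrodd. ring.
Qed.

Lemma fibre_cdf_shift_int x k : fibre_cdf (x + IZR k) = fibre_cdf x.
Proof.
  apply functional_extensionality. intro L. unfold fibre_cdf, arc_mass. do 2 f_equal.
  apply wsum_ext. intro n. unfold fibre_term. rewrite ssum_shift_int.
  replace (x + IZR k + INR n * al) with ((x + INR n * al) + IZR k) by ring.
  destruct (centre_width_shift (x + INR n * al) k) as [-> ->]. reflexivity.
Qed.

Lemma fibre_cdf_shift_half x L : 0 <= L <= 1 -> fibre_cdf (x + / 2) L = arc_mass x (- L) L.
Proof.
  intros HL. unfold fibre_cdf, arc_mass. do 2 f_equal. apply wsum_ext. intro n. unfold fibre_term.
  rewrite ssum_shift_half. replace (x + / 2 + INR n * al) with ((x + INR n * al) + / 2) by ring.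
  destruct (centre_width_half (x + INR n * al)) as [-> ->].
  rewrite Rplus_0_r. replace (ssum al r n x + - L) with (ssum al r n x - L) by ring.
  apply unif_arc_reflect; auto using width_range.
Qed.

Lemma arc_mass_complement x t : 0 <= t <= 1 -> 1 <= fibre_cdf x t + arc_mass x (t - 1) (1 - t).
Proof.
  intros Ht. unfold fibre_cdf, arc_mass.
  pose proof (wsum_const 1 ltac:(lra)).
  assert (wsum (fun _ => 1) <= wsum (fibre_term x 0 t) + wsum (fibre_term x (t - 1) (1 - t))).
  { rewrite <- (wsum_plus _ _ 1 1) by (apply fibre_term_range; lra).
    apply (wsum_le _ _ 2).
    - intro n. pose proof (fibre_term_range x 0 t Ht n).
      pose proof (fibre_term_range x (t - 1) (1 - t) ltac:(lra) n). lra.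
    - intro n. split; [lra|]. unfold fibre_term.
      rewrite (unif_arc_eqT1 _ (centre (x + INR n * al)) _ (ssum al r n x + (t - 1))
        (ssum al r n x + 0 + t));
        [| apply eqT1_refl | exists (-1)%Z; simpl; ring].
      apply unif_arc_complement; auto using width_range. }
  lra.
Qed.

(* The only atoms of the fibre laws sit on the backward orbits of [z_1], [z_2], whose
   heights avoid [0]; hence no fibre law charges the point [0] of its fibre. *)
Lemma fibre_term_atomless x n :
  atomless_at (centre (x + INR n * al)) (width (x + INR n * al)) (ssum al r n x + 0).
Proof.
  unfold atomless_at.
  destruct (Rlt_dec 0 (width (x + INR n * al))) as [|Hb]; [left; auto | right].
  pose proof (width_range (x + INR n * al)).
  destruct Heqy as [k0 Hk0].
  pose proof (frac_decomp (x + INR n * al)) as Eu. set (kk := Int_part (x + INR n * al)) in *.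
  intro Hf.
  pose proof (frac_decomp (centre (x + INR n * al) - (ssum al r n x + 0))) as Hm.
  rewrite Hf in Hm. set (m := Int_part _) in Hm.
  destruct (width_zero (x + INR n * al) ltac:(lra)) as [[E1 E2]|[E1 E2]];
    rewrite E2 in Hm; rewrite E1 in Eu.
  - apply (Hz1 (- Z.of_nat n)%Z). rewrite S_iter_neg_snd, ssum_neg_ssum. simpl.
    assert (Ex : x = x1 - INR n * al + IZR kk) by lra.
    rewrite Ex, ssum_shift_int in Hm.
    exists (m - k0)%Z. rewrite minus_IZR. lra.
  - apply (Hz2 (- Z.of_nat n)%Z). rewrite S_iter_neg_snd, ssum_neg_ssum. simpl.
    assert (Ex : x = x1 + / 2 - INR n * al + IZR kk) by lra.
    rewrite Ex, ssum_shift_int in Hm.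
    exists (m + k0)%Z. rewrite plus_IZR. lra.
Qed.

Lemma width_pos_off_orbit x : ~ inOminus al x1 x -> forall n, 0 < width (x + INR n * al).
Proof.
  intros HO n. pose proof (width_range (x + INR n * al)).
  destruct (Req_dec (width (x + INR n * al)) 0) as [Hb|Hb]; [|lra].
  exfalso. apply HO. exists n.
  pose proof (frac_decomp (x + INR n * al)) as Eu.
  destruct (width_zero _ Hb) as [[E1 _]|[E1 _]]; rewrite E1 in Eu.
  - left. exists (Int_part (x + INR n * al)). lra.
  - right. exists (Int_part (x + INR n * al)). lra.
Qed.

Lemma fibre_cdf_zero x : fibre_cdf x 0 = 0.
Proof.
  unfold fibre_cdf, arc_mass. rewrite (wsum_ext _ (fun _ => 0)).
  - rewrite wsum_const; lra.
  - intro n. apply unif_arc_empty; [apply width_range | apply fibre_term_atomless].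
Qed.

Lemma arc_mass_disjoint x t m1 m2 t2 : 0 <= t -> t < m1 -> m1 < m2 -> m2 < t2 -> t2 <= 1 ->
  fibre_cdf x t + arc_mass x m1 (m2 - m1) + arc_mass x (t2 - 1) (1 - t2) <= 1.
Proof.
  intros H1 H2 H3 H4 H5. unfold fibre_cdf, arc_mass.
  set (g1 := fibre_term x 0 t). set (g2 := fibre_term x m1 (m2 - m1)).
  set (g3 := fibre_term x (t2 - 1) (1 - t2)).
  assert (B1 : bounded_by g1 1) by (apply fibre_term_range; lra).
  assert (B2 : bounded_by g2 1) by (apply fibre_term_range; lra).
  assert (B3 : bounded_by g3 1) by (apply fibre_term_range; lra).
  assert (B12 : bounded_by (fun n => g1 n + g2 n) 2)
    by (intro n; specialize (B1 n); specialize (B2 n); lra).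
  pose proof (wsum_plus g1 g2 1 1 B1 B2). pose proof (wsum_plus _ g3 2 1 B12 B3).
  assert (wsum (fun n => g1 n + g2 n + g3 n) <= wsum (fun _ => 1)).
  { apply (wsum_le _ _ 1); [intro; lra|]. intro n.
    split; [specialize (B1 n); specialize (B2 n); specialize (B3 n); lra|].
    unfold g1, g2, g3, fibre_term.
    rewrite (unif_arc_eqT1 _ (centre (x + INR n * al)) _ (ssum al r n x + (t2 - 1))
      (ssum al r n x + 0 + t2)); [| apply eqT1_refl | exists (-1)%Z; simpl; ring].
    replace (ssum al r n x + m1) with (ssum al r n x + 0 + m1) by ring.
    apply unif_arc_disjoint; auto using width_range, fibre_term_atomless. }
  rewrite wsum_const in H6 by lra. lra.
Qed.

Lemma fibre_cdf_continuous x : ~ inOminus al x1 x -> continuous_on_01 (fibre_cdf x).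
Proof.
  intros HO L e HL He. pose proof (width_pos_off_orbit x HO) as Hw.
  destruct (half_pow_small (e / 2) ltac:(lra)) as [N HN].
  destruct (common_delta (fun n d => forall L', 0 <= L' <= 1 -> Rabs (L' - L) < d ->
     Rabs (fibre_term x 0 L' n - fibre_term x 0 L n) <= e / 4) N) as [d [Hd Hall]].
  { intros n d0 d' Hd' P L' H1 H2. apply P; auto; lra. }
  { intros n _. apply unif_arc_continuous; auto; [| lra].
    pose proof (width_range (x + INR n * al)). specialize (Hw n). lra. }
  exists (Rmin d (e / 4)). split; [apply Rmin_pos; lra|]. intros L' H1 H2.
  pose proof (Rmin_l d (e / 4)). pose proof (Rmin_r d (e / 4)).
  pose proof (fibre_term_range x 0 L' H1) as T1. pose proof (fibre_term_range x 0 L HL) as T2.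
  assert (Hclose : forall n, (n <= N)%nat ->
    -(e / 4) <= fibre_term x 0 L' n - fibre_term x 0 L n <= e / 4)
    by (intros n Hn; apply Rabs_le_between, Hall; auto; lra).
  pose proof (wsum_le_head N _ _ (e / 4) T1 T2 ltac:(lra)
    (fun n Hn => ltac:(pose proof (Hclose n Hn); lra))).
  pose proof (wsum_le_head N _ _ (e / 4) T2 T1 ltac:(lra)
    (fun n Hn => ltac:(pose proof (Hclose n Hn); lra))).
  apply Rabs_lt_between in H2. unfold fibre_cdf, arc_mass. apply Rabs_le_between. lra.
Qed.

Lemma fibre_cdf_widened_continuous : widened_continuous fibre_cdf.
Proof.
  intros x L d e HL HLd Hd He.
  destruct (half_pow_small (e / 2) ltac:(lra)) as [N HN].
  destruct (common_delta (fun n rho => forall h, Rabs h < rho ->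
     fibre_term x 0 L n - e / 2 <= fibre_term (x + h) 0 (L + d) n /\
     fibre_term (x + h) 0 L n <= fibre_term x 0 (L + d) n + e / 2) N) as [rho [Hrho Hall]].
  { intros n d0 d' Hd' P h Hh. apply P; lra. }
  { intros n _. unfold fibre_term.
    destruct (unif_arc_continuous_params_widened (centre (x + INR n * al)) (width (x + INR n * al))
       (ssum al r n x + 0) L d (e / 2) (width_range _) HL HLd Hd ltac:(lra)
       (fibre_term_atomless x n)) as [g [Hg HW]].
    destruct (centre_width_continuous (x + INR n * al) g Hg) as [d1 [Hd1 HA]].
    destruct (cont_at_ssum al r n x Hrc g Hg) as [d2 [Hd2 HS]].
    exists (Rmin d1 d2). split; [apply Rmin_pos; lra|]. intros h Hh.
    pose proof (Rmin_l d1 d2). pose proof (Rmin_r d1 d2).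
    destruct (HA h ltac:(lra)) as [HA1 HA2].
    replace (x + h + INR n * al) with (x + INR n * al + h) by ring.
    apply HW; auto using width_range.
    replace (ssum al r n (x + h) + 0 - (ssum al r n x + 0))
      with (ssum al r n (x + h) - ssum al r n x) by ring.
    apply HS. replace (x + h - x) with h by ring. lra. }
  exists rho. split; auto. intros h Hh.
  pose proof (fibre_term_range x 0 L ltac:(lra)) as T1.
  pose proof (fibre_term_range x 0 (L + d) ltac:(lra)) as T2.
  pose proof (fibre_term_range (x + h) 0 L ltac:(lra)) as T3.
  pose proof (fibre_term_range (x + h) 0 (L + d) ltac:(lra)) as T4.
  pose proof (wsum_le_head N _ _ (e / 2) T1 T4 ltac:(lra)
    (fun n Hn => ltac:(pose proof (proj1 (Hall n Hn h Hh)); lra))).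
  pose proof (wsum_le_head N _ _ (e / 2) T3 T2 ltac:(lra) (fun n Hn => proj2 (Hall n Hn h Hh))).
  unfold fibre_cdf, arc_mass. split; lra.
Qed.

Let T := Tmap al r x1 y1 xb1 xb2 psi phi.

Lemma tau_quantile x y : tau al r x1 y1 xb1 xb2 psi phi x y = quantile (fibre_cdf x) y.
Proof.
  unfold tau, quantile. f_equal. apply functional_extensionality. intro t.
  apply propositional_extensionality. unfold is_quantile. split.
  - intros [H1 [H2 H3]]. rewrite mu_fibre_cdf in H2 by auto.
    repeat split; try tauto. intros t' H4 H5. apply H3; auto. rewrite mu_fibre_cdf; auto.
  - intros [H1 [H2 H3]]. rewrite <- mu_fibre_cdf in H2 by auto.
    repeat split; try tauto. intros t' H4 H5. apply H3; auto. rewrite <- mu_fibre_cdf; auto.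
Qed.

Lemma T_fst p : fst (T p) = fst p.
Proof. reflexivity. Qed.

Lemma T_snd p : snd (T p) = quantile (fibre_cdf (fst p)) (frac (snd p)).
Proof. apply tau_quantile. Qed.

(* [P] maps the fibre over [x] to the fibre over [x + 1/2] reversing orientation, and the
   fibre law over [x + 1/2] is the mirror image of the one over [x]. *)
Lemma quantile_shift_half x s : 0 < s < 1 ->
  quantile (fibre_cdf (x + / 2)) (1 - s) = 1 - quantile (fibre_cdf x) s.
Proof.
  intros Hs.
  set (F := fibre_cdf x). set (G := fibre_cdf (x + / 2)).
  pose proof (fibre_cdf_steep x) as HF. pose proof (fibre_cdf_steep (x + / 2)) as HG.
  destruct (quantile_correct F HF s ltac:(lra)) as [Ht [Hge Hmin]].
  set (t := quantile F s) in *.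
  assert (Htp : 0 < t)
    by (destruct (Req_dec t 0) as [E|E]; [rewrite E in Hge; unfold F in Hge;
          rewrite fibre_cdf_zero in Hge; lra | lra]).
  apply (is_quantile_unique G (1 - s)); [apply quantile_correct; auto; lra|].
  split; [lra|]. split.
  - destruct (Rle_dec (1 - s) (G (1 - t))) as [|Hn]; auto. exfalso.
    destruct (steep_right_continuous G HG (1 - t) ((1 - s) - G (1 - t)) ltac:(lra) ltac:(lra))
      as [d [Hd Hd']].
    set (t' := t - Rmin d t / 2).
    pose proof (Rmin_pos d t Hd Htp). pose proof (Rmin_l d t). pose proof (Rmin_r d t).
    assert (Ht' : 0 <= t' <= 1) by (unfold t'; lra).
    pose proof (below_quantile F HF s t' ltac:(lra) Ht' ltac:(change (t' < t); unfold t'; lra)).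
    specialize (Hd' (1 - t') ltac:(unfold t'; lra) ltac:(unfold t'; lra)).
    pose proof (arc_mass_complement x t' Ht').
    unfold G in Hd'. rewrite fibre_cdf_shift_half in Hd' by lra.
    replace (- (1 - t')) with (t' - 1) in Hd' by ring. unfold F in *. lra.
  - intros y'' Hy'' HG'. destruct (Rle_dec (1 - t) y''); auto. exfalso.
    set (t2 := 1 - y'').
    pose proof (arc_mass_disjoint x t (t + (t2 - t) / 3) (t + 2 * (t2 - t) / 3) t2
      ltac:(lra) ltac:(unfold t2; lra) ltac:(unfold t2; lra) ltac:(unfold t2; lra)
      ltac:(unfold t2; lra)).
    pose proof (arc_mass_range x (t + (t2 - t) / 3) (t + 2 * (t2 - t) / 3 - (t + (t2 - t) / 3))
      ltac:(unfold t2; lra)).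
    unfold G in HG'. rewrite fibre_cdf_shift_half in HG' by lra.
    replace (t2 - 1) with (- y'') in H by (unfold t2; ring).
    replace (1 - t2) with y'' in H by (unfold t2; ring).
    unfold F in Hge. unfold t2 in *. lra.
Qed.

Lemma T_continuous : torus_continuous T.
Proof.
  intros p eps He.
  set (x := fst p). set (s := frac (snd p)). pose proof (frac_range (snd p)) as Hs. fold s in Hs.
  destruct (quantile_family_circle_continuous fibre_cdf fibre_cdf_steep
    fibre_cdf_widened_continuous x s eps Hs He) as [rho [Hrho C]].
  set (d := Rmin (Rmin rho eps) (/ 2)).
  assert (d <= rho /\ d <= eps /\ d <= / 2) as [D1 [D2 D3]]
    by (unfold d, Rmin; repeat destruct Rle_dec; lra).
  exists d. split; [unfold d; repeat apply Rmin_pos; lra|]. intros q Hq. unfold dT2 in *.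
  destruct (dT1_small _ _ _ (Rle_lt_trans _ _ _ (Rmax_l _ _) Hq) D3) as [h [k [Eh Hh]]].
  destruct (dT1_small _ _ _ (Rle_lt_trans _ _ _ (Rmax_r _ _) Hq) D3) as [h2 [k2 [Eh2 Hh2]]].
  apply Rmax_lub_lt; [rewrite !T_fst; eapply Rle_lt_trans; [apply (dT1_le _ _ h k Eh) | lra]|].
  assert (Es : snd q = (s + h2) + IZR (Int_part (snd p) + k2))
    by (rewrite plus_IZR; unfold s, frac in *; lra).
  rewrite !T_snd. fold x in Eh |- *. fold s.
  rewrite Eh, fibre_cdf_shift_int, Es, frac_shift. apply C; lra.
Qed.


Lemma T_onto_fibre x v : exists y, eqT2 (T (x, y)) (x, v).
Proof.
  set (t := frac v). pose proof (frac_range v) as Ht. fold t in Ht.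
  exists (fibre_cdf x t). pose proof (arc_mass_range x 0 t ltac:(lra)).
  split; [apply eqT1_refl|]. rewrite T_snd. simpl.
  rewrite frac_id by (unfold fibre_cdf; lra).
  rewrite quantile_of_value by (auto using fibre_cdf_steep; lra).
  apply eqT1_sym, eqT1_frac_self.
Qed.

Lemma T_surjective : torus_surjective T.
Proof. intros [x v]. destruct (T_onto_fibre x v) as [y Hy]. exists (x, y). exact Hy. Qed.

Lemma T_commutes_P p : eqT2 (T (Pmap p)) (Pmap (T p)).
Proof.
  destruct p as [x y]. split; [apply eqT1_refl|]. unfold Pmap. rewrite !T_snd. simpl.
  pose proof (frac_range y). pose proof (frac_decomp y).
  destruct (Req_dec (frac y) 0) as [E|E].
  - rewrite E, (frac_of_decomp (1 - y) (1 - Int_part y) 0) by (rewrite ?minus_IZR; simpl; lra).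
    rewrite !quantile_zero by apply fibre_cdf_steep.
    exists (-1)%Z. simpl. ring.
  - rewrite (frac_of_decomp (1 - y) (- Int_part y) (1 - frac y)) by (rewrite ?opp_IZR; lra).
    rewrite quantile_shift_half by lra. apply eqT1_refl.
Qed.

Lemma quantile_fibre_inverse x : ~ inOminus al x1 x ->
  (forall y, 0 <= y <= 1 -> fibre_cdf x (quantile (fibre_cdf x) y) = y) /\
  (forall y y', 0 <= y -> y < y' -> y' <= 1 ->
     quantile (fibre_cdf x) y < quantile (fibre_cdf x) y').
Proof.
  intros HO. pose proof (fibre_cdf_steep x) as HF. pose proof (fibre_cdf_zero x) as HF0.
  pose proof (fibre_cdf_continuous x HO) as HFc. split.
  - intros y Hy. apply value_of_quantile; auto.
  - intros y y' Hy Hyy Hy'. apply quantile_strict_mono; auto.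
Qed.

Lemma tau_fibre_inverse x : ~ inOminus al x1 x ->
  (forall y, 0 <= y <= 1 ->
     mu al r x1 y1 xb1 xb2 psi phi x (tau al r x1 y1 xb1 xb2 psi phi x y) = y) /\
  (forall y y', 0 <= y -> y < y' -> y' <= 1 ->
     tau al r x1 y1 xb1 xb2 psi phi x y < tau al r x1 y1 xb1 xb2 psi phi x y').
Proof.
  intros HO. destruct (quantile_fibre_inverse x HO) as [Hinv Hmono].
  split; intros; rewrite ?tau_quantile; auto.
  rewrite mu_fibre_cdf; auto. apply (quantile_range _ (fibre_cdf_steep x)). lra.
Qed.

Lemma inOminus_shift_int x k : inOminus al x1 x -> inOminus al x1 (x + IZR k).
Proof.
  intros [j [[m Hm]|[m Hm]]]; exists j; [left | right]; exists (m + k)%Z; rewrite plus_IZR; lra.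
Qed.

Lemma T_injective p q : ~ inOminus al x1 (fst p) -> eqT2 (T p) (T q) -> eqT2 p q.
Proof.
  intros HO [E1 E2]. destruct p as [x y], q as [x' y']. rewrite !T_fst in E1. rewrite !T_snd in E2.
  simpl in *. split; auto.
  destruct E1 as [k Hk]. rewrite Hk, fibre_cdf_shift_int in E2. rewrite Hk in HO.
  destruct (quantile_fibre_inverse x' (fun H => HO (inOminus_shift_int x' k H))) as [Hinv _].
  set (F := fibre_cdf x') in *. pose proof (fibre_cdf_steep x') as HF.
  pose proof (frac_range y). pose proof (frac_range y').
  assert (Hbelow1 : forall z, 0 <= z < 1 -> 0 <= quantile F z < 1).
  { intros z Hz. pose proof (quantile_range F HF z ltac:(lra)). pose proof (Hinv z ltac:(lra)).
    destruct (Req_dec (quantile F z) 1) as [E|E]; [|lra].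
    rewrite E, (steep_one F HF) in *. lra. }
  pose proof (Hbelow1 (frac y) ltac:(lra)). pose proof (Hbelow1 (frac y') ltac:(lra)).
  assert (Et : quantile F (frac y) = quantile F (frac y')).
  { destruct E2 as [m Hm].
    assert (-1 < IZR m < 1) as [A B] by lra. apply lt_IZR in A, B.
    replace m with 0%Z in Hm by lia. simpl in Hm. lra. }
  apply frac_eqT1. simpl. rewrite <- (Hinv (frac y)), <- (Hinv (frac y')), Et by lra. reflexivity.
Qed.

End Construction.

Theorem mainTheorem5
  (al : R) (r : R -> R) (x1 y1 xb1 xb2 : R) (psi phi : R -> R)
  (Hal : irrational al)
  (Hrc : continuity r)
  (Hrper : forall x, r (x + 1) = r x)
  (Hrodd : forall x, r (x + / 2) = - r x)
  (Hr0 : r 0 = 0) (Hrh : r (/ 2) = 0)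
  (Hrpos : forall x, 0 < x < / 2 -> 0 < r x < / 4)
  (HS : S_minimal al r)
  (Hx1 : 1 / 10 < x1 < 2 / 10) (Hx1q : rational x1)
  (Hz1 : forall m : Z,
     ~ eqT1 (snd (S_iter al r m (x1, y1))) 0 /\
     ~ eqT1 (snd (S_iter al r m (x1, y1))) (- r (x1 + IZR m * al)))
  (Hz2 : forall m : Z,
     ~ eqT1 (snd (S_iter al r m (x1 + / 2, 1 - y1))) 0 /\
     ~ eqT1 (snd (S_iter al r m (x1 + / 2, 1 - y1))) (- r (x1 + / 2 + IZR m * al)))
  (Hxb : 0 < xb1 /\ xb1 < x1 /\ x1 < xb2 /\ xb2 < / 2)
  (Hpsic : continuous_on_interval psi xb1 xb2)
  (Hphic : continuous_on_interval phi xb1 xb2)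
  (Hpsir : forall x, xb1 <= x <= xb2 -> 0 <= psi x <= 1)
  (Hphir : forall x, xb1 <= x <= xb2 -> 0 <= phi x <= 1)
  (Hpsi1 : psi xb1 = 0) (Hphi1 : phi xb1 = 1)
  (Hpsi2 : psi xb2 = 1) (Hphi2 : phi xb2 = 0)
  (Hlt : forall x, xb1 <= x < x1 -> psi x < phi x)
  (Hgt : forall x, x1 < x <= xb2 -> psi x > phi x)
  (Heq : psi x1 = phi x1) (Heqy : eqT1 (psi x1) y1) :
  let T := Tmap al r x1 y1 xb1 xb2 psi phi in
  let tau_ := tau al r x1 y1 xb1 xb2 psi phi in
  let mu_ := mu al r x1 y1 xb1 xb2 psi phi in
  torus_continuous T /\ torus_surjective T /\
  (forall p, eqT2 (T (Pmap p)) (Pmap (T p))) /\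
  (forall x, ~ inOminus al x1 x ->
     (forall y, 0 <= y <= 1 -> mu_ x (tau_ x y) = y) /\
     (forall y y', 0 <= y -> y < y' -> y' <= 1 -> tau_ x y < tau_ x y')) /\
  (forall p q, ~ inOminus al x1 (fst p) -> ~ inOminus al x1 (fst q) ->
     eqT2 (T p) (T q) -> eqT2 p q) /\
  (forall x, ~ inOminus al x1 x ->
     (forall y, eqT1 (fst (T (x, y))) x) /\
     (forall y z, eqT2 (T (x, y)) (T (x, z)) -> eqT1 y z) /\
     (forall v, exists y, eqT2 (T (x, y)) (x, v))).
Proof.
  intros T tau_ mu_.
  (* only the avoidance of the height 0 is needed *)
  pose proof (fun m => proj1 (Hz1 m)) as Hz1'. pose proof (fun m => proj1 (Hz2 m)) as Hz2'.
  split; [apply (T_continuous al r x1 y1 xb1 xb2 psi phi); auto|].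
  split; [apply (T_surjective al r x1 y1 xb1 xb2 psi phi); auto|].
  split; [intro p; apply (T_commutes_P al r x1 y1 xb1 xb2 psi phi); auto|].
  split; [intros x HO; apply (tau_fibre_inverse al r x1 y1 xb1 xb2 psi phi); auto|].
  split; [intros p q HO _; apply (T_injective al r x1 y1 xb1 xb2 psi phi); auto|].
  intros x HO. split; [intro y; apply eqT1_refl|]. split.
  - intros y z HT. refine (proj2 (_ : eqT2 (x, y) (x, z))).
    apply (T_injective al r x1 y1 xb1 xb2 psi phi); auto.
  - intro v. apply (T_onto_fibre al r x1 y1 xb1 xb2 psi phi); auto.
Qed.
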